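(* Let $r>0$ and $m\ge0$ an integer. There are constants $C$ depending only on $r$ and $m$ such that: (a) For every $C^\infty$ function $f\colon[0,1]\to\mathbb{R}^d$, $\lVert f\rVert^2_{r-1,m}\le C(\lVert f\rVert^2_{r,m}+\lVert f\rVert^2_{r+1,m+1})$ and $\lvert f\rvert^2_{\infty;r,m}\le C(\lVert f\rVert^2_{r,m}+\lVert f\rVert^2_{r+1,m+1})$; and if moreover $f^{(m)}(1)=0$, then $\lVert f\rVert^2_{r-1,m}\le C\lVert f\rVert^2_{r+1,m+1}$ and $\lvert f\rvert^2_{\infty;r,m}\le C\lVert f\rVert^2_{r+1,m+1}$. (b) The same four inequalities hold, with the same constants for all $n\in\mathbb{N}$, for every sequence $f_1,\dots,f_n\in\mathbb{R}^d$, with the norms interpreted as discrete seminorms, where in the last two inequalities the hypothesis $f^{(m)}(1)=0$ is replaced by $(\nabla_+^mf)_{n-m}=0$.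
   Context: Continuous weighted seminorms: $\lVert f\rVert^2_{r,m}=\int_0^1s^r\lvert f^{(m)}(s)\rvert^2ds$ and $\lvert f\rvert^2_{\infty;r,m}=\sup_{0\le s\le1}s^r\lvert f^{(m)}(s)\rvert^2$. Discrete: for $n\in\mathbb{N}$, real $r>-1$ and $k\ge1$, $s_k^{(r)}=\frac{\Gamma(k+r)}{n^r\Gamma(k)}$; $(\nabla_+f)_k=n(f_{k+1}-f_k)$; $\lVert f\rVert^2_{r,m}=\frac1n\sum_{k=1}^{n-m}s_k^{(r)}\lvert(\nabla_+^mf)_k\rvert^2$ and $\lvert f\rvert^2_{\infty;r,m}=\max_{1\le k\le n-m}s_k^{(r)}\lvert(\nabla_+^mf)_k\rvert^2$. *)

From Stdlib Require Import Reals Lra Arith ClassicalEpsilon.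
From Stdlib Require Import Factorial.
Open Scope R_scope.

Fixpoint sum0 (d : nat) (g : nat -> R) : R :=
  match d with O => 0 | S d' => sum0 d' g + g d' end.
Fixpoint sum1 (N : nat) (g : nat -> R) : R :=
  match N with O => 0 | S N' => sum1 N' g + g N end.
(* max_{1<=k<=N} g k  for nonnegative g (0 if N = 0) *)
Fixpoint max1 (N : nat) (g : nat -> R) : R :=
  match N with O => 0 | S N' => Rmax (max1 N' g) (g N) end.
Fixpoint prod0 (N : nat) (g : nat -> R) : R :=
  match N with O => g O | S N' => prod0 N' g * g N end.

Definition vec := nat -> R.   (* components 0..d-1 are relevant *)
Definition sqnorm (d : nat) (v : vec) : R := sum0 d (fun i => (v i) ^ 2).

(* s^a for s > 0 (value 0 at s <= 0; only used with s in (0,1], or with a > 0 at s = 0) *)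
Definition rpow (s a : R) : R :=
  if Rlt_dec 0 s then Rpower s a else 0.

(* ---------- Gamma function (Euler's limit formula, x > 0) ---------- *)
Definition Gamma (x : R) : R :=
  epsilon (inhabits 0) (fun g =>
    Un_cv (fun N => INR (fact N) * Rpower (INR N) x / prod0 N (fun j => x + INR j)) g).

(* Riemann integral of g on [a,b] (value irrelevant if not integrable) *)
Definition Rint (g : R -> R) (a b : R) : R :=
  epsilon (inhabits 0) (fun I => exists pr : Riemann_integrable g a b, RiemannInt pr = I).
Definition Int01 (g : R -> R) : R :=
  epsilon (inhabits 0) (fun I => forall eps, 0 < eps -> exists delta, 0 < delta /\
     forall a, 0 < a < delta -> Rabs (Rint g a 1 - I) < eps).

Definition deriv01 (g : R -> R) (x l : R) : Prop :=
  forall eps, 0 < eps -> exists delta, 0 < delta /\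
    forall h, h <> 0 -> Rabs h < delta -> 0 <= x + h <= 1 ->
      Rabs ((g (x + h) - g x) / h - l) < eps.
(* F k is the k-th derivative of f = F 0; C^infinity on [0,1] *)
Definition smooth01 (d : nat) (F : nat -> R -> vec) : Prop :=
  forall (i k : nat) (x : R), (i < d)%nat -> 0 <= x <= 1 ->
    deriv01 (fun s => F k s i) x (F (S k) x i).

(* continuous seminorms: ||f||^2_{r,m} and |f|^2_{inf;r,m} *)
Definition cnorm2 (d : nat) (r : R) (m : nat) (F : nat -> R -> vec) : R :=
  Int01 (fun s => rpow s r * sqnorm d (F m s)).
Definition csup2 (d : nat) (r : R) (m : nat) (F : nat -> R -> vec) : R :=
  epsilon (inhabits 0) (fun M =>
    is_lub (fun y => exists s, 0 <= s <= 1 /\ y = rpow s r * sqnorm d (F m s)) M).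

Definition nablap (n : nat) (f : nat -> vec) : nat -> vec :=
  fun k i => INR n * (f (S k) i - f k i).
Fixpoint nablapow (n m : nat) (f : nat -> vec) : nat -> vec :=
  match m with O => f | S m' => nablap n (nablapow n m' f) end.
Definition sw (n : nat) (r : R) (k : nat) : R :=
  Gamma (INR k + r) / (Rpower (INR n) r * Gamma (INR k)).
Definition dnorm2 (d n : nat) (r : R) (m : nat) (f : nat -> vec) : R :=
  / INR n * sum1 (n - m) (fun k => sw n r k * sqnorm d (nablapow n m f k)).
Definition dsup2 (d n : nat) (r : R) (m : nat) (f : nat -> vec) : R :=
  max1 (n - m) (fun k => sw n r k * sqnorm d (nablapow n m f k)).

From Stdlib Require Import Reals Lra Lia Psatz Arith ClassicalEpsilon Factorial.
From Coquelicot Require Import Coquelicot.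
Open Scope R_scope.

(** Both parts rest on the same two mechanisms, developed in parallel:
    - an increment bound: by Cauchy-Schwarz against the weight, the
      variation of [f^(m)] between two points [s <= t] is controlled by
      [||f||^2_{r+1,m+1}] with a factor [s^(-r)]; this gives the sup
      estimates (comparing a point with the right half of the interval, or
      with the endpoint when [f^(m)(1) = 0]);
    - an integration (summation) by parts of [s^r |f^(m)|^2], whose derivative
      (difference) produces the (r-1)-weight, and is controlled by the
      endpoint value and [||f||^2_{r+1,m+1}].
    The discrete weights [s_k^(r)] are handled abstractly as Gamma-type
    weights ([B (k+1) = B k (k + r) / k]), for which we first derive
    [Gamma x > 0] and [Gamma (x + 1) = x Gamma x] from Euler's limit formula. *)

(** * Euler's limit formula for Gamma *)

Definition euler_seq (x : R) (N : nat) : R :=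
  INR (fact N) * Rpower (INR N) x / prod0 N (fun j => x + INR j).

Lemma Rpower_pos a b : 0 < Rpower a b.
Proof. unfold Rpower. apply exp_pos. Qed.

Lemma Rpower_base1 a : Rpower 1 a = 1.
Proof. unfold Rpower. rewrite ln_1, Rmult_0_r, exp_0. reflexivity. Qed.

Lemma prod0_S N g : prod0 (S N) g = prod0 N g * g (S N).
Proof. reflexivity. Qed.

Lemma prod0_pos x N : 0 < x -> 0 < prod0 N (fun j => x + INR j).
Proof.
  intros hx; induction N as [|N IH].
  - simpl; lra.
  - rewrite prod0_S. apply Rmult_lt_0_compat; auto. pose proof (pos_INR (S N)); lra.
Qed.

Lemma prod0_shift x N :
  prod0 N (fun j => x + 1 + INR j) * x = prod0 N (fun j => x + INR j) * (x + 1 + INR N).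
Proof.
  induction N as [|N IH].
  - simpl; ring.
  - rewrite !prod0_S, S_INR.
    transitivity (prod0 N (fun j => x + 1 + INR j) * x * (x + 1 + (INR N + 1))); [ring|].
    rewrite IH. ring.
Qed.

Lemma euler_seq_shift x N : 0 < x -> (1 <= N)%nat ->
  euler_seq (x + 1) N = euler_seq x N * (x * INR N / (x + 1 + INR N)).
Proof.
  intros hx hN. unfold euler_seq.
  assert (hNp : 0 < INR N) by (apply lt_0_INR; lia).
  rewrite Rpower_plus, Rpower_1 by lra.
  pose proof (prod0_pos x N hx). pose proof (prod0_pos (x + 1) N ltac:(lra)).
  assert (h : prod0 N (fun j => x + 1 + INR j) =
              prod0 N (fun j => x + INR j) * (x + 1 + INR N) / x).
  { rewrite <- prod0_shift. field. lra. }
  rewrite h. field. repeat split; lra.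
Qed.

Lemma ln_le_sub1 y : 0 < y -> ln y <= y - 1.
Proof. intros hy. pose proof (exp_ineq1_le (ln y)) as h. rewrite exp_ln in h; lra. Qed.

(* (N+1)^x (N+1) >= N^x (x + N + 1), from ln (1 + 1/N) >= 1/(N+1). *)
Lemma euler_power_step x N : 0 < x -> 0 < INR N ->
  Rpower (INR N) x * (x + (INR N + 1)) <= Rpower (INR N + 1) x * (INR N + 1).
Proof.
  intros hx hNp.
  replace (INR N + 1) with (INR N * ((INR N + 1) / INR N)) at 2 by (field; lra).
  rewrite <- Rpower_mult_distr by (try apply Rdiv_lt_0_compat; lra).
  assert (hq : 1 + x / (INR N + 1) <= Rpower ((INR N + 1) / INR N) x).
  { unfold Rpower. eapply Rle_trans; [|apply exp_ineq1_le].
    apply Rplus_le_compat_l.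
    assert (hl : 1 / (INR N + 1) <= ln ((INR N + 1) / INR N)).
    { assert (h2 : ln (INR N / (INR N + 1)) <= INR N / (INR N + 1) - 1)
        by (apply ln_le_sub1; apply Rdiv_lt_0_compat; lra).
      replace ((INR N + 1) / INR N) with (/ (INR N / (INR N + 1))) by (field; lra).
      rewrite ln_Rinv by (apply Rdiv_lt_0_compat; lra).
      replace (INR N / (INR N + 1) - 1) with (- (1 / (INR N + 1))) in h2 by (field; lra).
      lra. }
    replace (x / (INR N + 1)) with (x * (1 / (INR N + 1))) by (field; lra).
    apply Rmult_le_compat_l; lra. }
  pose proof (Rpower_pos (INR N) x).
  replace (x + (INR N + 1)) with ((INR N + 1) * (1 + x / (INR N + 1))) by (field; lra).
  replace (Rpower (INR N) x * Rpower ((INR N + 1) / INR N) x * (INR N + 1)) with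
    ((Rpower (INR N) x * (INR N + 1)) * Rpower ((INR N + 1) / INR N) x) by ring.
  replace (Rpower (INR N) x * ((INR N + 1) * (1 + x / (INR N + 1)))) with
    ((Rpower (INR N) x * (INR N + 1)) * (1 + x / (INR N + 1))) by ring.
  apply Rmult_le_compat_l; [apply Rmult_le_pos|]; lra.
Qed.

Lemma euler_seq_growing x N : 0 < x -> (1 <= N)%nat -> euler_seq x N <= euler_seq x (S N).
Proof.
  intros hx hN. unfold euler_seq.
  assert (hNp : 0 < INR N) by (apply lt_0_INR; lia).
  rewrite prod0_S, S_INR.
  change (fact (S N)) with (S N * fact N)%nat. rewrite mult_INR, S_INR.
  pose proof (prod0_pos x N hx).
  assert (0 < INR (fact N)) by (apply lt_0_INR; apply lt_O_fact).
  pose proof (euler_power_step x N hx hNp).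
  assert (0 < x + (INR N + 1)) by lra.
  unfold Rdiv. rewrite Rinv_mult.
  apply (Rmult_le_reg_r (prod0 N (fun j => x + INR j) * (x + (INR N + 1)) / INR (fact N))).
  { apply Rdiv_lt_0_compat; [apply Rmult_lt_0_compat|]; lra. }
  field_simplify; lra.
Qed.

Lemma Rpower_bernoulli y x : 1 <= y -> 0 < x <= 1 -> Rpower y x <= 1 + x * (y - 1).
Proof.
  intros hy hx. destruct (Req_dec y 1) as [->|ne].
  - rewrite Rpower_base1. lra.
  - destruct (MVT_cor2 (fun c => Rpower c x) (fun c => x * Rpower c (x - 1)) 1 y)
      as [c [hc1 hc2]]; [lra| intros c hc; apply derivable_pt_lim_power; lra|].
    assert (Rpower c (x - 1) <= 1).
    { apply Rle_trans with (Rpower c 0); [apply Rle_Rpower; lra| rewrite Rpower_O; lra]. }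
    rewrite Rpower_base1 in hc1.
    assert (x * Rpower c (x - 1) * (y - 1) <= x * (y - 1)).
    { replace (x * (y - 1)) with (x * 1 * (y - 1)) by ring.
      apply Rmult_le_compat_r; [lra|]. apply Rmult_le_compat_l; lra. }
    lra.
Qed.

(* For 0 < x <= 1: x (x+1) ... (x+N) >= x N! (N+1)^x, which bounds euler_seq x by 1/x. *)
Lemma prod0_lower x N : 0 < x <= 1 ->
  x * INR (fact N) * Rpower (INR N + 1) x <= prod0 N (fun j => x + INR j).
Proof.
  intros hx. induction N as [|N IH].
  - simpl. replace (0 + 1) with 1 by ring. rewrite Rpower_base1. lra.
  - rewrite prod0_S. change (fact (S N)) with (S N * fact N)%nat. rewrite mult_INR, !S_INR.
    pose proof (pos_INR N).
    assert (0 < INR (fact N)) by (apply lt_0_INR; apply lt_O_fact).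
    assert (hb : Rpower (INR N + 1 + 1) x <= Rpower (INR N + 1) x * (1 + x / (INR N + 1))).
    { replace (INR N + 1 + 1) with ((INR N + 1) * ((INR N + 2) / (INR N + 1))) by (field; lra).
      rewrite <- Rpower_mult_distr by (try apply Rdiv_lt_0_compat; lra).
      apply Rmult_le_compat_l; [left; apply Rpower_pos|].
      eapply Rle_trans; [apply Rpower_bernoulli|]; try lra.
      - apply (Rmult_le_reg_r (INR N + 1)); [lra|]. field_simplify; lra.
      - right. field. lra. }
    apply Rle_trans with (x * INR (fact N) * Rpower (INR N + 1) x * (x + (INR N + 1))).
    2:{ apply Rmult_le_compat_r; [lra| exact IH]. }
    assert (0 < x * INR (fact N)) by (apply Rmult_lt_0_compat; lra).
    replace (x * ((INR N + 1) * INR (fact N)) * Rpower (INR N + 1 + 1) x) with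
      ((x * INR (fact N)) * ((INR N + 1) * Rpower (INR N + 1 + 1) x)) by ring.
    replace (x * INR (fact N) * Rpower (INR N + 1) x * (x + (INR N + 1))) with
      ((x * INR (fact N)) * ((INR N + 1) * (Rpower (INR N + 1) x * (1 + x / (INR N + 1)))))
      by (field; lra).
    apply Rmult_le_compat_l; [lra|]. apply Rmult_le_compat_l; lra.
Qed.

Lemma euler_seq_pos x N : 0 < x -> 0 < euler_seq x N.
Proof.
  intros hx. unfold euler_seq. pose proof (prod0_pos x N hx).
  assert (0 < INR (fact N)) by (apply lt_0_INR; apply lt_O_fact).
  pose proof (Rpower_pos (INR N) x).
  apply Rdiv_lt_0_compat; [apply Rmult_lt_0_compat|]; lra.
Qed.

Lemma euler_seq_bound01 x N : 0 < x <= 1 -> (1 <= N)%nat -> euler_seq x N <= / x.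
Proof.
  intros hx hN. unfold euler_seq.
  pose proof (prod0_pos x N ltac:(lra)). pose proof (prod0_lower x N hx).
  assert (0 < INR (fact N)) by (apply lt_0_INR; apply lt_O_fact).
  assert (0 < INR N) by (apply lt_0_INR; lia).
  assert (Rpower (INR N) x <= Rpower (INR N + 1) x) by (apply Rle_Rpower_l; lra).
  pose proof (Rpower_pos (INR N) x).
  apply (Rmult_le_reg_r (prod0 N (fun j => x + INR j))); [lra|].
  unfold Rdiv. rewrite Rmult_assoc, Rinv_l, Rmult_1_r by lra.
  apply (Rmult_le_reg_l x); [lra|].
  rewrite <- (Rmult_assoc x (/ x)), Rinv_r, Rmult_1_l by lra.
  eapply Rle_trans; [|eassumption].
  rewrite Rmult_assoc. apply Rmult_le_compat_l; [lra|]. apply Rmult_le_compat_l; lra.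
Qed.

(* Boundedness, by induction on the integer part of x using euler_seq_shift. *)
Lemma euler_seq_bounded x : 0 < x -> exists M, forall N, (1 <= N)%nat -> euler_seq x N <= M.
Proof.
  intros hx. destruct (INR_unbounded x) as [k hk].
  revert x hx hk. induction k as [|k IH]; intros x hx hk; [simpl in hk; lra|].
  destruct (Rle_dec x 1) as [h1|h1].
  - exists (/ x). intros N hN. apply euler_seq_bound01; auto; lra.
  - destruct (IH (x - 1)) as [M hM]; [lra| rewrite S_INR in hk; lra|].
    exists ((x - 1) * M). intros N hN.
    replace x with (x - 1 + 1) at 1 by ring.
    rewrite euler_seq_shift by (auto; lra).
    assert (0 < INR N) by (apply lt_0_INR; lia).
    pose proof (euler_seq_pos (x - 1) N ltac:(lra)).
    assert (hq : (x - 1) * INR N / (x - 1 + 1 + INR N) <= x - 1).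
    { apply (Rmult_le_reg_r (x - 1 + 1 + INR N)); [lra|].
      unfold Rdiv. rewrite Rmult_assoc, Rinv_l, Rmult_1_r by lra. nra. }
    assert (0 <= (x - 1) * INR N / (x - 1 + 1 + INR N))
      by (apply Rmult_le_pos; [nra| left; apply Rinv_0_lt_compat; lra]).
    specialize (hM N hN).
    rewrite Rmult_comm. apply Rmult_le_compat; lra.
Qed.

(* Monotone and bounded, hence convergent; the limit is positive. *)
Lemma euler_seq_cv x : 0 < x -> exists l, 0 < l /\ Un_cv (euler_seq x) l.
Proof.
  intros hx. destruct (euler_seq_bounded x hx) as [M hM].
  assert (hgr : Un_growing (fun n => euler_seq x (n + 1))).
  { intros n. replace (S n + 1)%nat with (S (n + 1)) by lia. apply euler_seq_growing; [auto|lia]. }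
  destruct (growing_cv (fun n => euler_seq x (n + 1))) as [l hl]; [exact hgr| |].
  { exists M. intros y [n ->]. apply hM. lia. }
  exists l. split.
  - eapply Rlt_le_trans; [|apply (growing_ineq _ _ hgr hl 0%nat)].
    apply euler_seq_pos; auto.
  - apply CV_shift with 1%nat. exact hl.
Qed.

Lemma Gamma_spec x l : Un_cv (euler_seq x) l -> Gamma x = l.
Proof.
  intros h. unfold Gamma.
  apply (UL_sequence (euler_seq x)); [|exact h].
  apply (epsilon_spec (inhabits 0) (fun g => Un_cv (euler_seq x) g)). exists l; exact h.
Qed.

Lemma Gamma_pos x : 0 < x -> 0 < Gamma x.
Proof.
  intros hx. destruct (euler_seq_cv x hx) as [l [hl hc]].
  rewrite (Gamma_spec x l hc). exact hl.
Qed.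

Lemma shift_factor_cv x : 0 < x -> Un_cv (fun n => x * INR (n + 1) / (x + 1 + INR (n + 1))) x.
Proof.
  intros hx eps heps.
  destruct (INR_unbounded (x * (x + 1) / eps)) as [N hN].
  exists N. intros n hn. unfold Rdist.
  assert (INR N <= INR n) by (apply le_INR; lia).
  pose proof (pos_INR n). rewrite plus_INR. simpl (INR 1).
  replace (x * (INR n + 1) / (x + 1 + (INR n + 1)) - x)
    with (- (x * (x + 1) / (x + 1 + (INR n + 1)))) by (field; lra).
  rewrite Rabs_Ropp, Rabs_right.
  2:{ apply Rle_ge, Rmult_le_pos; [nra| left; apply Rinv_0_lt_compat; lra]. }
  apply (Rmult_lt_reg_r (x + 1 + (INR n + 1))); [lra|].
  unfold Rdiv. rewrite Rmult_assoc, Rinv_l, Rmult_1_r by lra.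
  assert (x * (x + 1) < eps * INR N).
  { apply (Rmult_lt_reg_r (/ eps)); [apply Rinv_0_lt_compat; lra|].
    replace (eps * INR N * / eps) with (INR N) by (field; lra). unfold Rdiv in hN. lra. }
  nra.
Qed.

Lemma Gamma_succ x : 0 < x -> Gamma (x + 1) = x * Gamma x.
Proof.
  intros hx. destruct (euler_seq_cv x hx) as [l [hl hc]].
  rewrite (Gamma_spec x l hc). apply Gamma_spec.
  apply CV_shift with 1%nat.
  apply (Un_cv_ext (fun n => euler_seq x (n + 1) * (x * INR (n + 1) / (x + 1 + INR (n + 1))))).
  - intros n. rewrite euler_seq_shift by (auto; lia). reflexivity.
  - replace (x * l) with (l * x) by ring. apply CV_mult.
    + apply CV_shift'. exact hc.
    + apply shift_factor_cv; auto.
Qed.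

(** * Finite sums *)

Fixpoint rsum (a l : nat) (f : nat -> R) : R :=
  match l with O => 0 | S l' => rsum a l' f + f (a + l')%nat end.

Lemma rsum_S a l f : rsum a (S l) f = rsum a l f + f (a + l)%nat.
Proof. reflexivity. Qed.

Lemma rsum_ext a l f g : (forall i, (a <= i < a + l)%nat -> f i = g i) -> rsum a l f = rsum a l g.
Proof.
  induction l as [|l IH]; intros h; simpl; [reflexivity|].
  rewrite IH by (intros; apply h; lia). rewrite h by lia. reflexivity.
Qed.

Lemma rsum_le a l f g : (forall i, (a <= i < a + l)%nat -> f i <= g i) -> rsum a l f <= rsum a l g.
Proof.
  induction l as [|l IH]; intros h; simpl; [lra|].
  apply Rplus_le_compat; [apply IH; intros; apply h; lia| apply h; lia].
Qed.

Lemma rsum_nonneg a l f : (forall i, (a <= i < a + l)%nat -> 0 <= f i) -> 0 <= rsum a l f.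
Proof.
  induction l as [|l IH]; intros h; simpl; [lra|].
  apply Rplus_le_le_0_compat; [apply IH; intros; apply h; lia| apply h; lia].
Qed.

Lemma rsum_plus a l f g : rsum a l (fun i => f i + g i) = rsum a l f + rsum a l g.
Proof. induction l; simpl; [ring| rewrite IHl; ring]. Qed.

Lemma rsum_scal a l c f : rsum a l (fun i => c * f i) = c * rsum a l f.
Proof. induction l; simpl; [ring| rewrite IHl; ring]. Qed.

Lemma rsum_const a l c : rsum a l (fun _ => c) = INR l * c.
Proof. induction l; simpl rsum; [simpl; ring| rewrite IHl, S_INR; ring]. Qed.

Lemma rsum_split a l1 l2 f : rsum a (l1 + l2) f = rsum a l1 f + rsum (a + l1) l2 f.
Proof.
  induction l2 as [|l2 IH]; simpl.
  - rewrite Nat.add_0_r; ring.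
  - rewrite Nat.add_succ_r. simpl. rewrite IH.
    replace (a + l1 + l2)%nat with (a + (l1 + l2))%nat by lia. ring.
Qed.

Lemma rsum_shift a l f : rsum (S a) l f = rsum a l (fun i => f (S i)).
Proof.
  induction l; simpl; [auto|].
  rewrite IHl. replace (S a + l)%nat with (S (a + l)) by lia. auto.
Qed.

Lemma sum1_rsum N g : sum1 N g = rsum 1 N g.
Proof.
  induction N; simpl; [auto|].
  rewrite IHN. replace (S N) with (1 + N)%nat by lia. auto.
Qed.

Lemma rsum_telescope a l u : rsum a l (fun i => u (S i) - u i) = u (a + l)%nat - u a.
Proof.
  induction l as [|l IH]; simpl rsum.
  - rewrite Nat.add_0_r; ring.
  - rewrite IH. replace (S (a + l)) with (a + S l)%nat by lia. ring.
Qed.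

Lemma rsum_cauchy_schwarz a l u w : (forall i, (a <= i < a + l)%nat -> 0 < w i) ->
  (rsum a l u) ^ 2 <= rsum a l (fun i => / w i) * rsum a l (fun i => w i * u i ^ 2).
Proof.
  induction l as [|l IH]; intros hw; [simpl; lra|]. rewrite !rsum_S.
  set (S0 := rsum a l u). set (P := rsum a l (fun i => / w i)).
  set (Q := rsum a l (fun i => w i * u i ^ 2)).
  assert (h1 : S0 ^ 2 <= P * Q) by (apply IH; intros; apply hw; lia).
  assert (hP : 0 <= P) by (apply rsum_nonneg; intros; left; apply Rinv_0_lt_compat, hw; lia).
  assert (hQ : 0 <= Q)
    by (apply rsum_nonneg; intros; apply Rmult_le_pos; [left; apply hw; lia| nra]).
  set (W := w (a + l)%nat). set (U := u (a + l)%nat).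
  assert (hW : 0 < W) by (apply hw; lia).
  (* the cross term: 2 S0 U <= P W U^2 + Q / W, since (2 S0 U)^2 <= 4 P Q U^2 *)
  assert (cross : 2 * S0 * U <= P * W * U ^ 2 + Q / W).
  { set (Y := P * W * U ^ 2 + Q / W).
    assert (hY : 0 <= Y).
    { unfold Y. apply Rplus_le_le_0_compat;
        [apply Rmult_le_pos; [apply Rmult_le_pos|]; nra
        | apply Rmult_le_pos; [lra| left; apply Rinv_0_lt_compat; lra]]. }
    assert (hY2 : 4 * P * Q * U ^ 2 <= Y ^ 2).
    { unfold Y. replace ((P * W * U ^ 2 + Q / W) ^ 2)
        with ((P * W * U ^ 2 - Q / W) ^ 2 + 4 * P * Q * U ^ 2) by (field; lra).
      pose proof (pow2_ge_0 (P * W * U ^ 2 - Q / W)); lra. }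
    destruct (Rle_dec (2 * S0 * U) 0); [lra|].
    apply Rsqr_incr_0_var; [|lra]. unfold Rsqr. nra. }
  replace ((S0 + U) ^ 2) with (S0 ^ 2 + 2 * S0 * U + U ^ 2) by ring.
  replace ((P + / W) * (Q + W * U ^ 2))
    with (P * Q + (P * W * U ^ 2 + Q / W) + U ^ 2) by (field; lra).
  lra.
Qed.

Lemma sum0_plus d f g : sum0 d (fun i => f i + g i) = sum0 d f + sum0 d g.
Proof. induction d; simpl; [ring| rewrite IHd; ring]. Qed.

Lemma sum0_scal d c f : sum0 d (fun i => c * f i) = c * sum0 d f.
Proof. induction d; simpl; [ring| rewrite IHd; ring]. Qed.

Lemma sum0_le d f g : (forall i, (i < d)%nat -> f i <= g i) -> sum0 d f <= sum0 d g.
Proof.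
  induction d; intros h; simpl; [lra|].
  apply Rplus_le_compat; [apply IHd; intros; apply h; lia| apply h; lia].
Qed.

Lemma sum0_nonneg d f : (forall i, (i < d)%nat -> 0 <= f i) -> 0 <= sum0 d f.
Proof.
  induction d; intros h; simpl; [lra|].
  apply Rplus_le_le_0_compat; [apply IHd; intros; apply h; lia| apply h; lia].
Qed.

Lemma sum0_ext d f g : (forall i, (i < d)%nat -> f i = g i) -> sum0 d f = sum0 d g.
Proof. induction d; intros h; simpl; [auto|]. rewrite IHd, h by (auto; lia). auto. Qed.

Lemma sum0_zero d f : (forall i, (i < d)%nat -> f i = 0) -> sum0 d f = 0.
Proof. induction d; intros h; simpl; [auto|]. rewrite IHd, h by (auto; lia). ring. Qed.

Lemma rsum_sum0 a l d (c : nat -> R) (h : nat -> nat -> R) :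
  rsum a l (fun k => c k * sum0 d (h k)) = sum0 d (fun i => rsum a l (fun k => c k * h k i)).
Proof.
  induction l as [|l IH]; simpl.
  - symmetry. apply sum0_zero. auto.
  - rewrite IH, <- sum0_scal, <- sum0_plus. reflexivity.
Qed.

Lemma max1_le N F M : 0 <= M -> (forall k, (1 <= k <= N)%nat -> F k <= M) -> max1 N F <= M.
Proof.
  induction N as [|N IH]; intros hM h; simpl; [lra|].
  apply Rmax_lub; [apply IH; auto; intros; apply h; lia| apply h; lia].
Qed.

(** * Discrete Hardy-type inequalities for Gamma-type weights

    We prove: an increment bound (weighted Cauchy-Schwarz plus the telescoping
    sum [sum 1/(B_i (i+r)) = (1/B_k - 1/B_{k+l})/r]); two pointwise bounds for
    [B_k g_k^2] (by [energy/r] when [g_N = 0], and by [mass/N + energy] in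
    general, averaging over the upper half of {1..N}); and, by summation by
    parts, a bound of [sum B_k g_k^2/(k + r - 1)] by [B_N g_N^2 + energy]. *)

Definition gamma_weight (r : R) (B : nat -> R) : Prop :=
  (forall k, (1 <= k)%nat -> 0 < B k) /\
  (forall k, (1 <= k)%nat -> B (S k) = B k * (INR k + r) / INR k).

Lemma INR_ge1 k : (1 <= k)%nat -> 1 <= INR k.
Proof. intros h. apply (le_INR 1 k) in h. simpl in h. exact h. Qed.

Lemma young_ineq X u v b : 0 < b -> X * u * v <= b / 4 * v ^ 2 + X ^ 2 / b * u ^ 2.
Proof.
  intros hb. apply (Rmult_le_reg_l b); [lra|].
  replace (b * (b / 4 * v ^ 2 + X ^ 2 / b * u ^ 2))
    with (b * (X * u * v) + (b * v / 2 - X * u) ^ 2) by (field; lra).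
  pose proof (pow2_ge_0 (b * v / 2 - X * u)). lra.
Qed.

Lemma summation_by_parts (B x : nat -> R) N : (1 <= N)%nat ->
  rsum 1 N (fun k => (B (S k) - B k) * x k) + rsum 1 (N - 1) (fun k => B (S k) * (x (S k) - x k))
  = B (S N) * x N - B 1%nat * x 1%nat.
Proof.
  intros hN. destruct N as [|M]; [lia|]. clear hN.
  induction M as [|M IH]; [simpl; ring|].
  rewrite (rsum_S 1 (S M) (fun k => (B (S k) - B k) * x k)).
  replace (S (S M) - 1)%nat with (S M) by lia.
  rewrite (rsum_S 1 M (fun k => B (S k) * (x (S k) - x k))).
  replace (S M - 1)%nat with M in IH by lia.
  replace (1 + S M)%nat with (S (S M)) by lia. replace (1 + M)%nat with (S M) by lia.
  lra.
Qed.

Section GammaWeights.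

Variables (r : R) (B : nat -> R).
Hypothesis hr : 0 < r.
Hypothesis hB : gamma_weight r B.

Lemma weight_pos k : (1 <= k)%nat -> 0 < B k.
Proof. exact (proj1 hB k). Qed.

Lemma weight_succ k : (1 <= k)%nat -> B (S k) = B k * (INR k + r) / INR k.
Proof. exact (proj2 hB k). Qed.

Lemma weight_mono k j : (1 <= k <= j)%nat -> B k <= B j.
Proof.
  intros hkj. induction j as [|j IH]; [lia|].
  destruct (Nat.eq_dec k (S j)) as [->|ne]; [lra|].
  eapply Rle_trans; [apply IH; lia|].
  rewrite weight_succ by lia. pose proof (weight_pos j ltac:(lia)). pose proof (INR_ge1 j ltac:(lia)).
  apply (Rmult_le_reg_r (INR j)); [lra|].
  unfold Rdiv. rewrite Rmult_assoc, Rinv_l, Rmult_1_r by lra. nra.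
Qed.

Lemma weight_power_growth p k j : r <= INR p -> (1 <= k <= j)%nat ->
  B j * INR k ^ p <= B k * INR j ^ p.
Proof.
  intros hrp hkj. induction j as [|j IH]; [lia|].
  destruct (Nat.eq_dec k (S j)) as [->|ne]; [lra|].
  assert (IH' := IH ltac:(lia)).
  assert (hj : 1 <= INR j) by (apply INR_ge1; lia).
  rewrite weight_succ by lia. rewrite S_INR.
  (* one step: j^p (j + r) <= j (j + 1)^p, by Bernoulli's inequality *)
  assert (hstep : INR j ^ p * (INR j + r) <= INR j * (INR j + 1) ^ p).
  { replace (INR j + 1) with (INR j * (1 + / INR j)) by (field; lra).
    rewrite Rpow_mult_distr.
    pose proof (poly p (/ INR j) ltac:(apply Rinv_0_lt_compat; lra)).
    assert (INR j + r <= INR j * (1 + INR p * / INR j)).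
    { replace (INR j * (1 + INR p * / INR j)) with (INR j + INR p) by (field; lra). lra. }
    assert (0 < INR j ^ p) by (apply pow_lt; lra).
    replace (INR j * (INR j ^ p * (1 + / INR j) ^ p))
      with (INR j ^ p * (INR j * (1 + / INR j) ^ p)) by ring.
    apply Rmult_le_compat_l; [lra|]. nra. }
  pose proof (weight_pos j ltac:(lia)). pose proof (weight_pos k ltac:(lia)).
  assert (0 < INR k ^ p) by (apply pow_lt; apply lt_0_INR; lia).
  apply (Rmult_le_reg_r (INR j ^ p * INR j)); [apply Rmult_lt_0_compat; [apply pow_lt|]; lra|].
  replace (B j * (INR j + r) / INR j * INR k ^ p * (INR j ^ p * INR j)) with
    ((B j * INR k ^ p) * (INR j ^ p * (INR j + r))) by (field; lra).
  replace (B k * (INR j + 1) ^ p * (INR j ^ p * INR j)) with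
    ((B k * INR j ^ p) * (INR j * (INR j + 1) ^ p)) by ring.
  apply Rmult_le_compat; try lra.
  - apply Rmult_le_pos; lra.
  - apply Rmult_le_pos; [apply pow_le|]; lra.
Qed.

Lemma weight_doubling p k j : r <= INR p -> (1 <= k)%nat -> (1 <= j)%nat -> (k <= 2 * j)%nat ->
  B k <= 2 ^ p * B j.
Proof.
  intros hrp hk hj hkj.
  assert (h2 : 1 <= 2 ^ p) by (apply pow_R1_Rle; lra).
  pose proof (weight_pos j hj). pose proof (weight_pos k hk).
  destruct (le_lt_dec k j) as [hle|hlt].
  - pose proof (weight_mono k j ltac:(lia)). nra.
  - pose proof (weight_power_growth p j k hrp ltac:(lia)) as hpw.
    assert (hjp : 0 < INR j ^ p) by (apply pow_lt, lt_0_INR; lia).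
    assert (INR k ^ p <= 2 ^ p * INR j ^ p).
    { rewrite <- Rpow_mult_distr. apply pow_incr. split; [apply pos_INR|].
      apply le_INR in hkj. rewrite mult_INR in hkj. simpl (INR 2) in hkj. lra. }
    apply (Rmult_le_reg_r (INR j ^ p)); [lra|]. nra.
Qed.

Lemma weight_telescope_eq k l : (1 <= k)%nat ->
  rsum k l (fun i => / (B i * (INR i + r))) = (/ B k - / B (k + l)%nat) / r.
Proof.
  intros hk. induction l as [|l IH].
  - simpl. rewrite Nat.add_0_r. field. pose proof (weight_pos k hk); split; lra.
  - rewrite rsum_S, IH. replace (k + S l)%nat with (S (k + l)) by lia.
    rewrite weight_succ by lia.
    pose proof (weight_pos (k + l)%nat ltac:(lia)). pose proof (weight_pos k hk).
    assert (1 <= INR (k + l)) by (apply INR_ge1; lia).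
    field. repeat split; lra.
Qed.

Lemma weight_telescope k l : (1 <= k)%nat ->
  rsum k l (fun i => / (B i * (INR i + r))) <= / (r * B k).
Proof.
  intros hk. rewrite weight_telescope_eq by auto.
  pose proof (weight_pos k hk). pose proof (weight_pos (k + l)%nat ltac:(lia)).
  assert (0 < / B (k + l)%nat) by (apply Rinv_0_lt_compat; lra).
  rewrite Rinv_mult. unfold Rdiv. rewrite Rmult_comm.
  apply Rmult_le_compat_l; [left; apply Rinv_0_lt_compat|]; lra.
Qed.

(* Discrete energy (the (r+1, m+1) seminorm) and mass (the (r, m) seminorm). *)
Definition energy (N : nat) (g : nat -> R) : R :=
  rsum 1 (N - 1) (fun i => B i * (INR i + r) * (g (S i) - g i) ^ 2).

Definition mass (N : nat) (g : nat -> R) : R := rsum 1 N (fun k => B k * g k ^ 2).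

Lemma energy_terms_nonneg g a l : (1 <= a)%nat ->
  0 <= rsum a l (fun i => B i * (INR i + r) * (g (S i) - g i) ^ 2).
Proof.
  intros ha. apply rsum_nonneg. intros i hi.
  pose proof (weight_pos i ltac:(lia)). pose proof (pos_INR i).
  apply Rmult_le_pos; [apply Rmult_le_pos|]; first [lra | apply pow2_ge_0].
Qed.

Lemma energy_nonneg N g : 0 <= energy N g.
Proof. apply energy_terms_nonneg. lia. Qed.

Lemma mass_nonneg N g : 0 <= mass N g.
Proof.
  apply rsum_nonneg. intros i hi.
  apply Rmult_le_pos; [left; apply weight_pos; lia| apply pow2_ge_0].
Qed.

Lemma increment_bound N g lo hi : (1 <= lo <= hi)%nat -> (hi <= N)%nat ->
  (g hi - g lo) ^ 2 <= / (r * B lo) * energy N g.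
Proof.
  intros hlh hN.
  assert (ht : g hi - g lo = rsum lo (hi - lo) (fun i => g (S i) - g i)).
  { rewrite rsum_telescope. replace (lo + (hi - lo))%nat with hi by lia. auto. }
  rewrite ht.
  eapply Rle_trans; [apply (rsum_cauchy_schwarz lo (hi - lo) _ (fun i => B i * (INR i + r)))|].
  { intros i hi'. pose proof (weight_pos i ltac:(lia)). pose proof (pos_INR i).
    apply Rmult_lt_0_compat; lra. }
  apply Rmult_le_compat.
  - apply rsum_nonneg. intros i hi'. pose proof (weight_pos i ltac:(lia)). pose proof (pos_INR i).
    left; apply Rinv_0_lt_compat, Rmult_lt_0_compat; lra.
  - apply energy_terms_nonneg. lia.
  - apply weight_telescope. lia.
  - unfold energy.
    replace (N - 1)%nat with ((lo - 1) + (hi - lo) + (N - hi))%nat by lia.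
    rewrite !rsum_split. replace (1 + (lo - 1))%nat with lo by lia.
    pose proof (energy_terms_nonneg g 1 (lo - 1) ltac:(lia)).
    pose proof (energy_terms_nonneg g (1 + (lo - 1 + (hi - lo))) (N - hi) ltac:(lia)).
    lra.
Qed.

Lemma pointwise_bound_vanishing N g k : g N = 0 -> (1 <= k <= N)%nat ->
  B k * g k ^ 2 <= / r * energy N g.
Proof.
  intros hg hk.
  pose proof (increment_bound N g k N ltac:(lia) ltac:(lia)) as h.
  rewrite hg in h. replace ((0 - g k) ^ 2) with (g k ^ 2) in h by ring.
  pose proof (weight_pos k ltac:(lia)).
  apply (Rmult_le_compat_l (B k)) in h; [|lra].
  eapply Rle_trans; [exact h|]. right. field. lra.
Qed.

Lemma pointwise_bound_later p N g k j : r <= INR p -> (1 <= k <= N)%nat -> (1 <= j <= N)%nat ->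
  (k <= 2 * j)%nat -> B k * g k ^ 2 <= 2 ^ (S p) * (B j * g j ^ 2 + / r * energy N g).
Proof.
  intros hrp hk hj hkj.
  pose proof (energy_nonneg N g) as hE. set (E := energy N g) in *.
  assert (h2 : 1 <= 2 ^ p) by (apply pow_R1_Rle; lra).
  set (lo := Nat.min j k). set (hi := Nat.max j k).
  assert (hd : (g k - g j) ^ 2 <= / (r * B lo) * E).
  { replace ((g k - g j) ^ 2) with ((g hi - g lo) ^ 2).
    - apply increment_bound; unfold lo, hi; lia.
    - unfold lo, hi. destruct (le_lt_dec j k).
      + rewrite Nat.min_l, Nat.max_r by lia. auto.
      + rewrite Nat.min_r, Nat.max_l by lia. ring. }
  assert (hrat : B k <= 2 ^ p * B j) by (apply (weight_doubling p); auto; lia).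
  pose proof (weight_pos lo ltac:(unfold lo; lia)).
  pose proof (weight_pos k ltac:(lia)). pose proof (weight_pos j ltac:(lia)).
  assert (hrat2 : B k <= 2 ^ p * B lo).
  { unfold lo. destruct (le_lt_dec j k).
    - rewrite Nat.min_l by lia. exact hrat.
    - rewrite Nat.min_r by lia. nra. }
  assert (hsq : g k ^ 2 <= 2 * g j ^ 2 + 2 * (g k - g j) ^ 2).
  { pose proof (pow2_ge_0 (g k - 2 * g j)). nra. }
  assert (hA : B k * (/ (r * B lo) * E) <= 2 ^ p * (/ r * E)).
  { rewrite Rinv_mult.
    replace (B k * (/ r * / B lo * E)) with ((B k / B lo) * (/ r * E)) by (field; lra).
    apply Rmult_le_compat_r; [apply Rmult_le_pos; [left; apply Rinv_0_lt_compat|]; lra|].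
    apply (Rmult_le_reg_r (B lo)); [lra|].
    unfold Rdiv. rewrite Rmult_assoc, Rinv_l, Rmult_1_r by lra. lra. }
  assert (hB2 : B k * g j ^ 2 <= 2 ^ p * (B j * g j ^ 2)).
  { rewrite <- Rmult_assoc. apply Rmult_le_compat_r; [apply pow2_ge_0| lra]. }
  assert (hD : B k * (g k - g j) ^ 2 <= B k * (/ (r * B lo) * E))
    by (apply Rmult_le_compat_l; lra).
  assert (B k * g k ^ 2 <= 2 * (B k * g j ^ 2) + 2 * (B k * (g k - g j) ^ 2))
    by (apply (Rmult_le_compat_l (B k)) in hsq; lra).
  simpl pow. lra.
Qed.

(* General pointwise bound, by averaging pointwise_bound_later over the
   upper half j in [N - N/2, N] of the index range. *)
Lemma pointwise_bound p N g k : r <= INR p -> (1 <= k <= N)%nat ->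
  B k * g k ^ 2 <= 2 ^ (S p) * (2 * mass N g / INR N + / r * energy N g).
Proof.
  intros hrp hk.
  assert (hhalf : (2 * (N / 2) <= N <= 2 * (N / 2) + 1)%nat).
  { pose proof (Nat.div_mod_eq N 2). pose proof (Nat.mod_upper_bound N 2 ltac:(lia)). lia. }
  set (q := (N / 2)%nat) in *. set (h := (N - q)%nat). set (L := S q).
  pose proof (energy_nonneg N g) as hE. set (E := energy N g) in *.
  assert (hsum : INR L * (B k * g k ^ 2) <= 2 ^ (S p) * (mass N g + INR L * (/ r * E))).
  { rewrite <- rsum_const with (a := h).
    eapply Rle_trans.
    { apply (rsum_le h L _ (fun j => 2 ^ S p * (B j * g j ^ 2 + / r * E))).
      intros j hj. apply pointwise_bound_later; [exact hrp|..]; unfold h, L in *; lia. }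
    rewrite rsum_scal, rsum_plus, rsum_const.
    apply Rmult_le_compat_l; [apply pow_le; lra|].
    apply Rplus_le_compat_r.
    unfold mass. replace (rsum 1 N (fun k0 => B k0 * g k0 ^ 2))
      with (rsum 1 ((h - 1) + L) (fun k0 => B k0 * g k0 ^ 2)) by (f_equal; unfold h, L; lia).
    rewrite rsum_split. replace (1 + (h - 1))%nat with h by (unfold h; lia).
    assert (0 <= rsum 1 (h - 1) (fun k0 => B k0 * g k0 ^ 2)).
    { apply rsum_nonneg. intros i hi.
      apply Rmult_le_pos; [left; apply weight_pos; lia| apply pow2_ge_0]. }
    lra. }
  assert (hL : 0 < INR L) by (apply lt_0_INR; unfold L; lia).
  assert (hN : INR N <= 2 * INR L).
  { assert (hNL : (N <= 2 * L)%nat) by (unfold L; lia).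
    apply le_INR in hNL. rewrite mult_INR in hNL. simpl (INR 2) in hNL. lra. }
  assert (0 < INR N) by (apply lt_0_INR; lia).
  pose proof (mass_nonneg N g).
  apply (Rmult_le_reg_l (INR L)); [lra|]. eapply Rle_trans; [exact hsum|].
  assert (mass N g <= INR L * (2 * mass N g / INR N)).
  { apply (Rmult_le_reg_r (INR N)); [lra|].
    replace (INR L * (2 * mass N g / INR N) * INR N) with (2 * INR L * mass N g) by (field; lra).
    nra. }
  assert (0 < 2 ^ S p) by (apply pow_lt; lra).
  nra.
Qed.

(* One summation-by-parts term, split by Young's inequality into a quarter of
   the two neighbouring harmonic terms r B_k g_k^2 / k plus an energy term. *)
Lemma cross_term_bound g k : (1 <= k)%nat ->
  - (B (S k) * (g (S k) ^ 2 - g k ^ 2)) <=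
  / 4 * (r * B k / INR k * g k ^ 2) + / 4 * (r * B (S k) / INR (S k) * g (S k) ^ 2)
  + (3 + r) / r * (B k * (INR k + r) * (g (S k) - g k) ^ 2).
Proof.
  intros hk.
  pose proof (weight_pos k hk) as hb. pose proof (INR_ge1 k hk) as hK.
  set (b := B k) in *. set (K := INR k) in *. set (a := g k). set (c := g (S k)).
  rewrite S_INR. fold K. rewrite weight_succ by auto. fold b K.
  set (X := b * (K + r) / K).
  assert (hX : 0 < X) by (unfold X; apply Rdiv_lt_0_compat; [apply Rmult_lt_0_compat|]; lra).
  replace (- (X * (c ^ 2 - a ^ 2))) with (X * (a - c) * a + X * (a - c) * c) by ring.
  assert (hb1 : 0 < r * b / K) by (apply Rdiv_lt_0_compat; [apply Rmult_lt_0_compat|]; lra).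
  assert (hb2 : 0 < r * X / (K + 1)) by (apply Rdiv_lt_0_compat; [apply Rmult_lt_0_compat|]; lra).
  pose proof (young_ineq X (a - c) a (r * b / K) hb1) as h1.
  pose proof (young_ineq X (a - c) c (r * X / (K + 1)) hb2) as h2.
  assert (hc0 : 0 < b * (K + r) / r) by (apply Rdiv_lt_0_compat; [apply Rmult_lt_0_compat|]; lra).
  assert (q1 : X ^ 2 / (r * b / K) <= (1 + r) / r * (b * (K + r))).
  { unfold X. replace ((b * (K + r) / K) ^ 2 / (r * b / K))
      with ((b * (K + r) / r) * ((K + r) / K)) by (field; lra).
    replace ((1 + r) / r * (b * (K + r))) with ((b * (K + r) / r) * (1 + r)) by (field; lra).
    apply Rmult_le_compat_l; [lra|].
    apply (Rmult_le_reg_r K); [lra|]. unfold Rdiv. rewrite Rmult_assoc, Rinv_l, Rmult_1_r by lra. nra. }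
  assert (q2 : X ^ 2 / (r * X / (K + 1)) <= 2 / r * (b * (K + r))).
  { replace (X ^ 2 / (r * X / (K + 1))) with (X * (K + 1) / r) by (field; lra).
    unfold X. replace (b * (K + r) / K * (K + 1) / r) with ((b * (K + r) / r) * ((K + 1) / K))
      by (field; lra).
    replace (2 / r * (b * (K + r))) with ((b * (K + r) / r) * 2) by (field; lra).
    apply Rmult_le_compat_l; [lra|].
    apply (Rmult_le_reg_r K); [lra|]. unfold Rdiv. rewrite Rmult_assoc, Rinv_l, Rmult_1_r by lra. lra. }
  pose proof (pow2_ge_0 (a - c)).
  replace ((c - a) ^ 2) with ((a - c) ^ 2) by ring.
  assert (X ^ 2 / (r * b / K) * (a - c) ^ 2 <= (1 + r) / r * (b * (K + r)) * (a - c) ^ 2)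
    by (apply Rmult_le_compat_r; auto).
  assert (X ^ 2 / (r * X / (K + 1)) * (a - c) ^ 2 <= 2 / r * (b * (K + r)) * (a - c) ^ 2)
    by (apply Rmult_le_compat_r; auto).
  replace ((3 + r) / r * (b * (K + r) * (a - c) ^ 2))
    with ((1 + r) / r * (b * (K + r)) * (a - c) ^ 2 + 2 / r * (b * (K + r)) * (a - c) ^ 2)
    by (field; lra).
  unfold Rdiv in *. lra.
Qed.

(* The harmonic mass sum_{k<=N} r B_k g_k^2 / k; note r B_k / k = B_(k+1) - B_k. *)
Definition harmonic_mass (N : nat) (g : nat -> R) : R :=
  rsum 1 N (fun k => r * B k / INR k * g k ^ 2).

Lemma harmonic_terms_nonneg g a l : (1 <= a)%nat ->
  0 <= rsum a l (fun k => r * B k / INR k * g k ^ 2).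
Proof.
  intros ha. apply rsum_nonneg. intros i hi.
  pose proof (weight_pos i ltac:(lia)). pose proof (INR_ge1 i ltac:(lia)).
  apply Rmult_le_pos; [left; apply Rdiv_lt_0_compat; [apply Rmult_lt_0_compat|]; lra| apply pow2_ge_0].
Qed.

Lemma summation_by_parts_bulk N g : (1 <= N)%nat ->
  - rsum 1 (N - 1) (fun k => B (S k) * (g (S k) ^ 2 - g k ^ 2))
  <= / 2 * harmonic_mass N g + (3 + r) / r * energy N g.
Proof.
  intros hN.
  replace (- rsum 1 (N - 1) (fun k => B (S k) * (g (S k) ^ 2 - g k ^ 2)))
    with (rsum 1 (N - 1) (fun k => -1 * (B (S k) * (g (S k) ^ 2 - g k ^ 2))))
    by (rewrite rsum_scal; ring).
  eapply Rle_trans.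
  { apply (rsum_le 1 (N - 1) _ (fun k => / 4 * (r * B k / INR k * g k ^ 2)
        + / 4 * (r * B (S k) / INR (S k) * g (S k) ^ 2)
        + (3 + r) / r * (B k * (INR k + r) * (g (S k) - g k) ^ 2))).
    intros i hi.
    replace (-1 * (B (S i) * (g (S i) ^ 2 - g i ^ 2))) with (- (B (S i) * (g (S i) ^ 2 - g i ^ 2)))
      by ring.
    apply cross_term_bound; lia. }
  rewrite !rsum_plus, !rsum_scal.
  assert (rsum 1 (N - 1) (fun k => r * B k / INR k * g k ^ 2) <= harmonic_mass N g).
  { unfold harmonic_mass.
    replace (rsum 1 N (fun k => r * B k / INR k * g k ^ 2))
      with (rsum 1 ((N - 1) + 1) (fun k => r * B k / INR k * g k ^ 2)) by (f_equal; lia).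
    rewrite rsum_split. pose proof (harmonic_terms_nonneg g (1 + (N - 1)) 1 ltac:(lia)). lra. }
  assert (rsum 1 (N - 1) (fun k => r * B (S k) / INR (S k) * g (S k) ^ 2) <= harmonic_mass N g).
  { rewrite <- (rsum_shift 1 (N - 1) (fun k => r * B k / INR k * g k ^ 2)).
    unfold harmonic_mass.
    replace (rsum 1 N (fun k => r * B k / INR k * g k ^ 2))
      with (rsum 1 (1 + (N - 1)) (fun k => r * B k / INR k * g k ^ 2)) by (f_equal; lia).
    rewrite rsum_split. pose proof (harmonic_terms_nonneg g 1 1 ltac:(lia)). simpl (1 + 1)%nat. lra. }
  unfold energy. lra.
Qed.

Lemma harmonic_mass_bound N g : (1 <= N)%nat ->
  harmonic_mass N g <= 2 * (1 + r) * (B N * g N ^ 2) + 2 * (3 + r) / r * energy N g.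
Proof.
  intros hN.
  pose proof (summation_by_parts B (fun k => g k ^ 2) N hN) as hid.
  assert (e1 : rsum 1 N (fun k => (B (S k) - B k) * g k ^ 2) = harmonic_mass N g).
  { unfold harmonic_mass. apply rsum_ext. intros i hi. rewrite weight_succ by lia.
    pose proof (INR_ge1 i ltac:(lia)). field. lra. }
  cbv beta in hid. rewrite e1 in hid.
  pose proof (summation_by_parts_bulk N g hN) as hbulk.
  assert (hl : B (S N) * g N ^ 2 <= (1 + r) * (B N * g N ^ 2)).
  { rewrite weight_succ by auto. pose proof (weight_pos N hN). pose proof (INR_ge1 N hN).
    pose proof (pow2_ge_0 (g N)).
    replace (B N * (INR N + r) / INR N * g N ^ 2) with ((B N * g N ^ 2) * ((INR N + r) / INR N))
      by (field; lra).
    rewrite (Rmult_comm (1 + r)). apply Rmult_le_compat_l; [apply Rmult_le_pos; lra|].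
    apply (Rmult_le_reg_r (INR N)); [lra|].
    unfold Rdiv. rewrite Rmult_assoc, Rinv_l, Rmult_1_r by lra. nra. }
  assert (0 <= B 1%nat * g 1%nat ^ 2)
    by (apply Rmult_le_pos; [left; apply weight_pos; lia| apply pow2_ge_0]).
  replace (2 * (3 + r) / r * energy N g) with (2 * ((3 + r) / r * energy N g)) by (field; lra).
  lra.
Qed.

(* The (r-1)-weighted sum is controlled by the harmonic mass, as
   k + r - 1 >= min(1, r) k for k >= 1. *)
Lemma lower_mass_bound N g :
  rsum 1 N (fun k => B k / (INR k + r - 1) * g k ^ 2) <= / (r * Rmin 1 r) * harmonic_mass N g.
Proof.
  assert (hm : 0 < Rmin 1 r) by (apply Rmin_glb_lt; lra).
  unfold harmonic_mass. rewrite <- rsum_scal. apply rsum_le. intros i hi.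
  pose proof (weight_pos i ltac:(lia)). pose proof (INR_ge1 i ltac:(lia)).
  assert (hk : Rmin 1 r * INR i <= INR i + r - 1) by (unfold Rmin; destruct (Rle_dec 1 r); nra).
  rewrite <- Rmult_assoc. apply Rmult_le_compat_r; [apply pow2_ge_0|].
  replace (/ (r * Rmin 1 r) * (r * B i / INR i)) with (B i / (Rmin 1 r * INR i))
    by (field; repeat split; lra).
  unfold Rdiv. apply Rmult_le_compat_l; [lra|].
  apply Rinv_le_contravar; [apply Rmult_lt_0_compat|]; lra.
Qed.

End GammaWeights.

(** * The discrete inequalities (part (b))

    The weights [s_k^(r) = Gamma(k + r) / (n^r Gamma(k))] are of Gamma type,
    and shifting [r] by one multiplies them by [n / (k + r - 1)] resp.
    [(k + r) / n].  Writing [g = nabla_+^m f] and [N = n - m], the three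
    discrete seminorms thus become a sum of [mass]es, a sum of [energy]s and
    the (r-1)-weighted sum of [lower_mass_bound].  The estimates of the
    previous section, summed over the coordinates, then give part (b) with
    a constant independent of [n, d, f] (using [n <= (m + 1) N]). *)

Lemma Rpower_succ x a : 0 < x -> Rpower x (a + 1) = Rpower x a * x.
Proof. intros hx. rewrite Rpower_plus, Rpower_1 by lra. reflexivity. Qed.

Lemma sw_gamma_weight n r : 0 < r -> (1 <= n)%nat -> gamma_weight r (sw n r).
Proof.
  intros hr hn. assert (0 < INR n) by (apply lt_0_INR; lia).
  split; intros k hk; pose proof (INR_ge1 k hk); unfold sw.
  - pose proof (Gamma_pos (INR k + r) ltac:(lra)). pose proof (Gamma_pos (INR k) ltac:(lra)).
    pose proof (Rpower_pos (INR n) r).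
    apply Rdiv_lt_0_compat; [lra| apply Rmult_lt_0_compat; lra].
  - rewrite S_INR. replace (INR k + 1 + r) with ((INR k + r) + 1) by ring.
    rewrite !Gamma_succ by lra.
    pose proof (Gamma_pos (INR k + r) ltac:(lra)). pose proof (Gamma_pos (INR k) ltac:(lra)).
    pose proof (Rpower_pos (INR n) r).
    field. repeat split; lra.
Qed.

Lemma sw_pred n r k : 0 < r -> (1 <= n)%nat -> (1 <= k)%nat ->
  sw n (r - 1) k = sw n r k * INR n / (INR k + r - 1).
Proof.
  intros hr hn hk. assert (0 < INR n) by (apply lt_0_INR; lia).
  pose proof (INR_ge1 k hk). unfold sw.
  replace (INR k + r) with ((INR k + (r - 1)) + 1) by ring.
  replace (Rpower (INR n) r) with (Rpower (INR n) ((r - 1) + 1)) by (f_equal; ring).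
  rewrite Gamma_succ, Rpower_succ by lra.
  pose proof (Gamma_pos (INR k + (r - 1)) ltac:(lra)). pose proof (Gamma_pos (INR k) ltac:(lra)).
  pose proof (Rpower_pos (INR n) (r - 1)).
  field. repeat split; lra.
Qed.

Lemma sw_succ n r k : 0 < r -> (1 <= n)%nat -> (1 <= k)%nat ->
  sw n (r + 1) k = sw n r k * (INR k + r) / INR n.
Proof.
  intros hr hn hk. assert (0 < INR n) by (apply lt_0_INR; lia).
  pose proof (INR_ge1 k hk). unfold sw.
  replace (INR k + (r + 1)) with ((INR k + r) + 1) by ring.
  rewrite Gamma_succ, Rpower_succ by lra.
  pose proof (Gamma_pos (INR k + r) ltac:(lra)). pose proof (Gamma_pos (INR k) ltac:(lra)).
  pose proof (Rpower_pos (INR n) r).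
  field. repeat split; lra.
Qed.

Lemma dnorm2_pred_eq d n r m f : 0 < r -> (1 <= n)%nat ->
  dnorm2 d n (r - 1) m f =
  sum0 d (fun i => rsum 1 (n - m) (fun k => sw n r k / (INR k + r - 1) * nablapow n m f k i ^ 2)).
Proof.
  intros hr hn. assert (0 < INR n) by (apply lt_0_INR; lia).
  unfold dnorm2, sqnorm. rewrite sum1_rsum, <- rsum_scal, <- rsum_sum0.
  apply rsum_ext. intros k hk. rewrite sw_pred by (auto; lia).
  pose proof (INR_ge1 k ltac:(lia)). field. split; lra.
Qed.

Lemma dnorm2_mass_eq d n r m f :
  dnorm2 d n r m f = / INR n * sum0 d (fun i => mass (sw n r) (n - m) (fun k => nablapow n m f k i)).
Proof.
  unfold dnorm2, sqnorm, mass. rewrite sum1_rsum. f_equal.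
  apply (rsum_sum0 1 (n - m) d (sw n r) (fun k i => nablapow n m f k i ^ 2)).
Qed.

Lemma dnorm2_succ_eq d n r m f : 0 < r -> (1 <= n)%nat ->
  dnorm2 d n (r + 1) (S m) f =
  sum0 d (fun i => energy r (sw n r) (n - m) (fun k => nablapow n m f k i)).
Proof.
  intros hr hn. assert (0 < INR n) by (apply lt_0_INR; lia).
  unfold dnorm2, sqnorm, energy. rewrite sum1_rsum, <- rsum_scal.
  replace (n - S m)%nat with (n - m - 1)%nat by lia.
  rewrite <- (rsum_sum0 1 (n - m - 1) d (fun k => sw n r k * (INR k + r))
    (fun k i => (nablapow n m f (S k) i - nablapow n m f k i) ^ 2)).
  apply rsum_ext. intros k hk. rewrite sw_succ by (auto; lia).
  pose proof (INR_ge1 k ltac:(lia)).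
  assert (e : sum0 d (fun i => nablapow n (S m) f k i ^ 2) =
    INR n ^ 2 * sum0 d (fun i => (nablapow n m f (S k) i - nablapow n m f k i) ^ 2)).
  { rewrite <- sum0_scal. apply sum0_ext. intros i hi. simpl nablapow. unfold nablap. ring. }
  rewrite e. field. lra.
Qed.

Lemma dnorm2_nonneg d n r m f : 0 < r -> (1 <= n)%nat -> 0 <= dnorm2 d n r m f.
Proof.
  intros hr hn. rewrite dnorm2_mass_eq.
  assert (0 < INR n) by (apply lt_0_INR; lia).
  apply Rmult_le_pos; [left; apply Rinv_0_lt_compat; lra|].
  apply sum0_nonneg. intros. apply (mass_nonneg r); auto. apply sw_gamma_weight; auto.
Qed.

Lemma le_mul_weaken X a b Y : X <= a * Y -> 0 <= Y -> a <= b -> X <= b * Y.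
Proof. intros h1 h2 h3. apply Rle_trans with (a * Y); [exact h1| apply Rmult_le_compat_r; auto]. Qed.

(* The constants; p is an integer with r <= p.  [sup_const] is the constant
   of the pointwise bound, [abel_const] the one of the summation by parts. *)
Definition sup_const (r : R) (p m : nat) : R := 2 ^ S p * (2 * (INR m + 1) + / r).
Definition abel_const (r : R) (p m : nat) : R := 2 * (1 + r) * sup_const r p m + 2 * (3 + r) / r.
Definition disc_const (r : R) (p m : nat) : R :=
  sup_const r p m + / r + / (r * Rmin 1 r) * abel_const r p m.

Lemma disc_const_bounds r p m : 0 < r ->
  0 <= sup_const r p m /\ sup_const r p m <= disc_const r p m /\ / r <= disc_const r p m /\
  / (r * Rmin 1 r) * (2 * (3 + r) / r) <= / (r * Rmin 1 r) * abel_const r p m /\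
  / (r * Rmin 1 r) * abel_const r p m <= disc_const r p m.
Proof.
  intros hr.
  assert (hK : 0 <= sup_const r p m).
  { unfold sup_const. pose proof (pos_INR m). pose proof (pow_lt 2 (S p) ltac:(lra)).
    assert (0 < / r) by (apply Rinv_0_lt_compat; lra).
    apply Rmult_le_pos; lra. }
  assert (0 < / r) by (apply Rinv_0_lt_compat; lra).
  assert (0 < / (r * Rmin 1 r))
    by (apply Rinv_0_lt_compat, Rmult_lt_0_compat; [lra| apply Rmin_glb_lt; lra]).
  assert (0 <= 2 * (3 + r) / r) by (unfold Rdiv; apply Rmult_le_pos; lra).
  assert (0 <= 2 * (1 + r) * sup_const r p m) by (apply Rmult_le_pos; lra).
  assert (h3 : 2 * (3 + r) / r <= abel_const r p m) by (unfold abel_const; lra).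
  assert (0 <= / (r * Rmin 1 r) * abel_const r p m) by (apply Rmult_le_pos; lra).
  unfold disc_const. repeat split; try lra.
  apply Rmult_le_compat_l; lra.
Qed.

Lemma disc_const_pos r p m : 0 < r -> 0 <= disc_const r p m.
Proof. intros hr. destruct (disc_const_bounds r p m hr) as [h1 [h2 _]]. lra. Qed.

Section DiscreteEstimate.

Variables (r : R) (p m d n N : nat) (B : nat -> R) (g : nat -> nat -> R).
Hypothesis hr : 0 < r.
Hypothesis hrp : r <= INR p.
Hypothesis hB : gamma_weight r B.
Hypothesis hn : 0 < INR n.
Hypothesis hNn : INR n <= (INR m + 1) * INR N.
Hypothesis hN : (1 <= N)%nat.

(* g i k is coordinate i of the k-th vector. *)
Local Notation Mass := (/ INR n * sum0 d (fun i => mass B N (g i))).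
Local Notation Energy := (sum0 d (fun i => energy r B N (g i))).
Local Notation sq k := (sum0 d (fun i => g i k ^ 2)).

Lemma Mass_nonneg : 0 <= Mass.
Proof.
  apply Rmult_le_pos; [left; apply Rinv_0_lt_compat; lra|].
  apply sum0_nonneg. intros. apply (mass_nonneg r); auto.
Qed.

Lemma Energy_nonneg : 0 <= Energy.
Proof. apply sum0_nonneg. intros. apply energy_nonneg; auto. Qed.

(* [pointwise_bound] summed over coordinates, with 1/N <= (m+1)/n. *)
Lemma vec_pointwise_bound k : (1 <= k <= N)%nat -> B k * sq k <= sup_const r p m * (Mass + Energy).
Proof.
  intros hk. pose proof Mass_nonneg. pose proof Energy_nonneg.
  assert (0 < INR N) by (apply lt_0_INR; lia). pose proof (pos_INR m).
  rewrite <- sum0_scal.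
  eapply Rle_trans.
  { apply (sum0_le d _ (fun i => 2 ^ S p * (2 * mass B N (g i) / INR N + / r * energy r B N (g i)))).
    intros i hi. apply pointwise_bound; auto. }
  rewrite sum0_scal, sum0_plus. unfold Rdiv.
  rewrite (sum0_ext d (fun i => 2 * mass B N (g i) * / INR N)
    (fun i => (2 * / INR N) * mass B N (g i))) by (intros; ring).
  rewrite !sum0_scal.
  assert (2 * / INR N * sum0 d (fun i => mass B N (g i)) <= 2 * (INR m + 1) * Mass).
  { apply (Rmult_le_reg_r (INR N * INR n)); [apply Rmult_lt_0_compat; lra|].
    replace (2 * / INR N * sum0 d (fun i => mass B N (g i)) * (INR N * INR n))
      with (2 * INR n * sum0 d (fun i => mass B N (g i))) by (field; lra).
    replace (2 * (INR m + 1) * Mass * (INR N * INR n))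
      with (2 * ((INR m + 1) * INR N) * sum0 d (fun i => mass B N (g i))) by (field; lra).
    apply Rmult_le_compat_r; [|lra].
    apply sum0_nonneg. intros. apply (mass_nonneg r); auto. }
  assert (0 < / r) by (apply Rinv_0_lt_compat; lra).
  unfold sup_const. rewrite (Rmult_assoc (2 ^ S p) (2 * (INR m + 1) + / r)).
  apply Rmult_le_compat_l; [apply pow_le; lra|].
  assert (2 * (INR m + 1) * Mass <= 2 * (INR m + 1) * (Mass + Energy)) by (apply Rmult_le_compat_l; lra).
  assert (/ r * Energy <= / r * (Mass + Energy)) by (apply Rmult_le_compat_l; lra).
  lra.
Qed.

Lemma vec_pointwise_bound_vanishing k : (forall i, (i < d)%nat -> g i N = 0) -> (1 <= k <= N)%nat ->
  B k * sq k <= / r * Energy.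
Proof.
  intros hbc hk. rewrite <- !sum0_scal.
  apply sum0_le. intros i hi. apply pointwise_bound_vanishing; auto.
Qed.

Lemma vec_lower_bound :
  sum0 d (fun i => rsum 1 N (fun k => B k / (INR k + r - 1) * g i k ^ 2)) <=
  / (r * Rmin 1 r) * (2 * (1 + r) * (B N * sq N) + 2 * (3 + r) / r * Energy).
Proof.
  assert (0 < / (r * Rmin 1 r)) by (apply Rinv_0_lt_compat, Rmult_lt_0_compat;
    [lra| apply Rmin_glb_lt; lra]).
  eapply Rle_trans.
  { apply (sum0_le d _ (fun i => / (r * Rmin 1 r) * harmonic_mass r B N (g i))).
    intros i hi. apply lower_mass_bound; auto. }
  rewrite sum0_scal. apply Rmult_le_compat_l; [lra|].
  eapply Rle_trans.
  { apply (sum0_le d _ (fun i => 2 * (1 + r) * (B N * g i N ^ 2)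
                                  + 2 * (3 + r) / r * energy r B N (g i))).
    intros i hi. apply harmonic_mass_bound; auto. }
  rewrite sum0_plus, !sum0_scal. lra.
Qed.

(* The (r-1)-weighted sum, bounded via vec_lower_bound and the pointwise bound at N. *)
Lemma vec_lower_estimate :
  sum0 d (fun i => rsum 1 N (fun k => B k / (INR k + r - 1) * g i k ^ 2))
    <= disc_const r p m * (Mass + Energy).
Proof.
  destruct (disc_const_bounds r p m hr) as [hK [_ [_ [_ hA]]]].
  pose proof Mass_nonneg. pose proof Energy_nonneg.
  pose proof (vec_pointwise_bound N ltac:(lia)) as hNb.
  assert (0 < / (r * Rmin 1 r))
    by (apply Rinv_0_lt_compat, Rmult_lt_0_compat; [lra| apply Rmin_glb_lt; lra]).
  eapply Rle_trans; [apply vec_lower_bound|].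
  apply Rle_trans with (/ (r * Rmin 1 r) * abel_const r p m * (Mass + Energy));
    [|apply Rmult_le_compat_r; lra].
  rewrite (Rmult_assoc (/ (r * Rmin 1 r)) (abel_const r p m)).
  apply Rmult_le_compat_l; [lra|]. unfold abel_const.
  assert (2 * (1 + r) * (B N * sq N) <= 2 * (1 + r) * (sup_const r p m * (Mass + Energy)))
    by (apply Rmult_le_compat_l; lra).
  assert (2 * (3 + r) / r * Energy <= 2 * (3 + r) / r * (Mass + Energy))
    by (apply Rmult_le_compat_l; [unfold Rdiv; apply Rmult_le_pos; [|left; apply Rinv_0_lt_compat]|]; lra).
  lra.
Qed.

Lemma vec_lower_estimate_vanishing : (forall i, (i < d)%nat -> g i N = 0) ->
  sum0 d (fun i => rsum 1 N (fun k => B k / (INR k + r - 1) * g i k ^ 2))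
    <= disc_const r p m * Energy.
Proof.
  intros hbc. destruct (disc_const_bounds r p m hr) as [_ [_ [_ [h3 hA]]]].
  assert (hz : sq N = 0) by (apply sum0_zero; intros i hi; rewrite hbc by auto; ring).
  eapply Rle_trans; [apply vec_lower_bound|].
  rewrite hz, Rmult_0_r, Rmult_0_r, Rplus_0_l, <- Rmult_assoc.
  apply Rmult_le_compat_r; [apply Energy_nonneg| lra].
Qed.

Lemma discrete_estimate :
  sum0 d (fun i => rsum 1 N (fun k => B k / (INR k + r - 1) * g i k ^ 2))
    <= disc_const r p m * (Mass + Energy) /\
  max1 N (fun k => B k * sq k) <= disc_const r p m * (Mass + Energy) /\
  ((forall i, (i < d)%nat -> g i N = 0) ->
    sum0 d (fun i => rsum 1 N (fun k => B k / (INR k + r - 1) * g i k ^ 2))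
      <= disc_const r p m * Energy /\
    max1 N (fun k => B k * sq k) <= disc_const r p m * Energy).
Proof.
  destruct (disc_const_bounds r p m hr) as [hK [hKC [hrC _]]].
  pose proof Mass_nonneg. pose proof Energy_nonneg. pose proof (disc_const_pos r p m hr).
  assert (0 < / r) by (apply Rinv_0_lt_compat; lra).
  split; [apply vec_lower_estimate|].
  split; [|intros hbc; split; [apply vec_lower_estimate_vanishing; auto|]].
  - apply max1_le; [apply Rmult_le_pos; lra|]. intros k hk.
    apply (le_mul_weaken _ (sup_const r p m)); [apply vec_pointwise_bound; auto| lra| auto].
  - apply max1_le; [apply Rmult_le_pos; lra|]. intros k hk.
    apply (le_mul_weaken _ (/ r)); [apply vec_pointwise_bound_vanishing; auto| lra| auto].
Qed.

End DiscreteEstimate.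

Lemma discrete_part r m : 0 < r -> exists C, 0 <= C /\
    (forall (d n : nat) (f : nat -> vec), (1 <= n)%nat ->
       dnorm2 d n (r - 1) m f <= C * (dnorm2 d n r m f + dnorm2 d n (r + 1) (S m) f) /\
       dsup2 d n r m f <= C * (dnorm2 d n r m f + dnorm2 d n (r + 1) (S m) f) /\
       ((forall i, (i < d)%nat -> nablapow n m f (n - m)%nat i = 0) ->
          dnorm2 d n (r - 1) m f <= C * dnorm2 d n (r + 1) (S m) f /\
          dsup2 d n r m f <= C * dnorm2 d n (r + 1) (S m) f)).
Proof.
  intros hr. destruct (INR_unbounded r) as [p hp].
  pose proof (disc_const_pos r p m hr) as hC.
  exists (disc_const r p m). split; [exact hC|].
  intros d n f hn.
  pose proof (dnorm2_nonneg d n r m f hr hn).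
  pose proof (dnorm2_nonneg d n (r + 1) (S m) f ltac:(lra) hn).
  destruct (Nat.eq_dec (n - m) 0) as [hN0|hN1].
  - (* no m-th differences at all: the left-hand sides vanish *)
    unfold dsup2. rewrite (dnorm2_pred_eq d n r m f hr hn), hN0. simpl max1.
    rewrite (sum0_zero d (fun i => rsum 1 0 _)) by reflexivity.
    repeat split; intros; apply Rmult_le_pos; lra.
  - assert (0 < INR n) by (apply lt_0_INR; lia).
    rewrite dnorm2_pred_eq, dnorm2_mass_eq, dnorm2_succ_eq by auto.
    unfold dsup2, sqnorm.
    apply (discrete_estimate r p m d n (n - m)); auto; [lra| apply sw_gamma_weight; auto| |lia].
    assert (h' : (n <= (m + 1) * (n - m))%nat) by nia. apply le_INR in h'.
    rewrite mult_INR, plus_INR in h'. simpl (INR 1) in h'. lra.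
Qed.

(** * Tools from real analysis *)

Lemma cont_mult (f g : R -> R) (x : R) :
  continuous f x -> continuous g x -> continuous (fun y => f y * g y) x.
Proof. intros; apply (@continuous_mult R_UniformSpace R_AbsRing f g x); auto. Qed.

Lemma cont_plus (f g : R -> R) (x : R) :
  continuous f x -> continuous g x -> continuous (fun y => f y + g y) x.
Proof. intros; apply (@continuous_plus R_UniformSpace R_AbsRing R_NormedModule f g x); auto. Qed.

Lemma cont_sq (f : R -> R) (x : R) : continuous f x -> continuous (fun y => f y ^ 2) x.
Proof.
  intros h. apply (continuous_ext (fun y => f y * f y)); [intros y; simpl; ring| apply cont_mult; auto].
Qed.

Lemma cont_Rpower (a x : R) : 0 < x -> continuous (fun w => Rpower w a) x.
Proof.
  intros hx. apply (@ex_derive_continuous R_AbsRing R_NormedModule). exists (a * Rpower x (a - 1)).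
  apply is_derive_Reals. apply derivable_pt_lim_power; auto.
Qed.

Lemma cont_sum0 d (f : nat -> R -> R) x : (forall i, (i < d)%nat -> continuous (f i) x) ->
  continuous (fun y => sum0 d (fun i => f i y)) x.
Proof.
  induction d as [|d IH]; intros h; simpl.
  - apply continuous_const.
  - apply (cont_plus (fun y => sum0 d (fun i => f i y)) (f d));
      [apply IH; intros; apply h; lia| apply h; lia].
Qed.

Lemma derive_sum0 d (f df : nat -> R -> R) x : (forall i, (i < d)%nat -> is_derive (f i) x (df i x)) ->
  is_derive (fun y => sum0 d (fun i => f i y)) x (sum0 d (fun i => df i x)).
Proof.
  induction d as [|d IH]; intros h; simpl.
  - apply (@is_derive_const R_AbsRing R_NormedModule).
  - apply (@is_derive_plus R_AbsRing R_NormedModule (fun y => sum0 d (fun i => f i y)) (f d));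
      [apply IH; intros; apply h; lia| apply h; lia].
Qed.

(* Extensionality of integrals, stated for real-valued functions so that
   the side conditions are equations in R. *)
Lemma RInt_extR (f g : R -> R) a b :
  (forall x, Rmin a b < x < Rmax a b -> f x = g x) -> RInt f a b = RInt g a b.
Proof. apply RInt_ext. Qed.

Lemma ex_RInt_extR (f g : R -> R) a b :
  (forall x, Rmin a b < x < Rmax a b -> f x = g x) -> ex_RInt f a b -> ex_RInt g a b.
Proof. apply ex_RInt_ext. Qed.

Lemma RInt_constR (c a b : R) : RInt (fun _ => c) a b = (b - a) * c.
Proof. rewrite (@RInt_const R_CompleteNormedModule). reflexivity. Qed.

Lemma ex_RInt_constR (c a b : R) : ex_RInt (fun _ => c) a b.
Proof. apply (@ex_RInt_const R_CompleteNormedModule). Qed.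

Lemma is_RInt_lin (f g h : R -> R) a b c1 c2 : ex_RInt f a b -> ex_RInt g a b -> ex_RInt h a b ->
  is_RInt (fun x => c1 * f x + c2 * g x + h x) a b (c1 * RInt f a b + c2 * RInt g a b + RInt h a b).
Proof.
  intros hf hg hh.
  apply (@is_RInt_plus R_NormedModule (fun x => c1 * f x + c2 * g x) h).
  - apply (@is_RInt_plus R_NormedModule (fun x => c1 * f x) (fun x => c2 * g x)).
    + apply (@is_RInt_scal R_NormedModule f a b c1). apply (@RInt_correct R_CompleteNormedModule); auto.
    + apply (@is_RInt_scal R_NormedModule g a b c2). apply (@RInt_correct R_CompleteNormedModule); auto.
  - apply (@RInt_correct R_CompleteNormedModule); auto.
Qed.

Lemma RInt_lin (f g h : R -> R) a b c1 c2 : ex_RInt f a b -> ex_RInt g a b -> ex_RInt h a b ->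
  RInt (fun x => c1 * f x + c2 * g x + h x) a b = c1 * RInt f a b + c2 * RInt g a b + RInt h a b.
Proof. intros. apply is_RInt_unique. apply is_RInt_lin; auto. Qed.

Lemma ex_RInt_lin (f g h : R -> R) a b c1 c2 : ex_RInt f a b -> ex_RInt g a b -> ex_RInt h a b ->
  ex_RInt (fun x => c1 * f x + c2 * g x + h x) a b.
Proof. intros. eexists. apply is_RInt_lin; auto. Qed.

Lemma RInt_le_const (f : R -> R) a b M : a <= b -> ex_RInt f a b -> (forall x, a < x < b -> f x <= M) ->
  RInt f a b <= (b - a) * M.
Proof.
  intros hab he h. rewrite <- RInt_constR. apply RInt_le; auto. apply ex_RInt_constR.
Qed.

Lemma RInt_le_extend (f : R -> R) a b c : a <= b <= c -> ex_RInt f a c ->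
  (forall x, b < x < c -> 0 <= f x) ->
  RInt f a b <= RInt f a c.
Proof.
  intros habc he hn.
  assert (h1 : ex_RInt f a b) by (apply (ex_RInt_Chasles_1 f a b c); auto).
  assert (h2 : ex_RInt f b c) by (apply (ex_RInt_Chasles_2 f a b c); auto).
  rewrite <- (RInt_Chasles f a b c h1 h2).
  assert (0 <= RInt f b c) by (apply RInt_ge_0; auto; lra).
  change (RInt f a b <= RInt f a b + RInt f b c). lra.
Qed.

Lemma ex_RInt_cont (f : R -> R) s t : s <= t -> (forall x, s <= x <= t -> continuous f x) ->
  ex_RInt f s t.
Proof.
  intros hst hc. apply (@ex_RInt_continuous R_CompleteNormedModule).
  intros z hz. rewrite Rmin_left, Rmax_right in hz by lra. auto.
Qed.

Lemma RInt_derive (W V : R -> R) s t : s <= t -> (forall x, s <= x <= t -> is_derive W x (V x)) ->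
  (forall x, s <= x <= t -> continuous V x) -> RInt V s t = W t - W s.
Proof.
  intros hst hd hc. apply (@is_RInt_unique R_CompleteNormedModule).
  apply (@is_RInt_derive R_CompleteNormedModule W V).
  - intros x hx. rewrite Rmin_left, Rmax_right in hx by lra. auto.
  - intros x hx. rewrite Rmin_left, Rmax_right in hx by lra. auto.
Qed.

Lemma RInt_sum0 d (f : nat -> R -> R) a b : (forall i, (i < d)%nat -> ex_RInt (f i) a b) ->
  ex_RInt (fun x => sum0 d (fun i => f i x)) a b /\
  RInt (fun x => sum0 d (fun i => f i x)) a b = sum0 d (fun i => RInt (f i) a b).
Proof.
  induction d as [|d IH]; intros h; simpl.
  - split; [apply ex_RInt_constR| rewrite RInt_constR; ring].
  - destruct IH as [he hr]; [intros; apply h; lia|].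
    assert (hd : ex_RInt (f d) a b) by (apply h; lia).
    split.
    + apply (ex_RInt_extR (fun x => 1 * sum0 d (fun i => f i x) + 1 * f d x + 0)); [intros; ring|].
      apply (ex_RInt_lin (fun x => sum0 d (fun i => f i x)) (f d) (fun _ => 0)); auto. apply ex_RInt_constR.
    + rewrite (RInt_extR _ (fun x => 1 * sum0 d (fun i => f i x) + 1 * f d x + 0)) by (intros; ring).
      rewrite (RInt_lin (fun x => sum0 d (fun i => f i x)) (f d) (fun _ => 0))
        by (auto; apply ex_RInt_constR).
      rewrite hr, RInt_constR. ring.
Qed.

Lemma quadratic_discriminant A B C : (forall l, 0 <= l ^ 2 * A - 2 * l * C + B) -> C ^ 2 <= A * B.
Proof.
  intros h.
  assert (hA : 0 <= A).
  { destruct (Rle_dec 0 A); auto.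
    exfalso. assert (hB : 0 <= B) by (specialize (h 0); lra).
    (* for A < 0 the polynomial is negative at the large point t *)
    set (t := (Rabs C + B + 1) * 2 / (- A) + 1).
    assert (ht : 1 <= t).
    { unfold t. assert (0 <= (Rabs C + B + 1) * 2 / - A).
      { unfold Rdiv. apply Rmult_le_pos;
          [pose proof (Rabs_pos C); lra| left; apply Rinv_0_lt_compat; lra]. }
      lra. }
    specialize (h t).
    assert (e : t * (- A) >= (Rabs C + B + 1) * 2).
    { unfold t. replace (((Rabs C + B + 1) * 2 / - A + 1) * - A)
        with ((Rabs C + B + 1) * 2 + - A) by (field; lra). lra. }
    assert (hc : - (2 * t * C) <= 2 * t * Rabs C).
    { pose proof (Rle_abs (- C)) as hC. rewrite Rabs_Ropp in hC. nra. }
    nra. }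
  destruct (Req_dec A 0) as [e|ne].
  - subst A. destruct (Req_dec C 0) as [->|nc]; [lra|].
    specialize (h ((B + 1) / (2 * C))).
    replace (((B + 1) / (2 * C)) ^ 2 * 0 - 2 * ((B + 1) / (2 * C)) * C + B) with (-1) in h
      by (field; auto). lra.
  - specialize (h (C / A)).
    replace ((C / A) ^ 2 * A - 2 * (C / A) * C + B) with (B - C ^ 2 / A) in h by (field; auto).
    apply (Rmult_le_compat_l A) in h; [|lra].
    replace (A * (B - C ^ 2 / A)) with (A * B - C ^ 2) in h by (field; auto). lra.
Qed.

Lemma RInt_cauchy_schwarz f g a b : a <= b ->
  ex_RInt (fun x => f x ^ 2) a b -> ex_RInt (fun x => g x ^ 2) a b ->
  ex_RInt (fun x => f x * g x) a b ->
  (RInt (fun x => f x * g x) a b) ^ 2 <= RInt (fun x => f x ^ 2) a b * RInt (fun x => g x ^ 2) a b.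
Proof.
  intros hab hf hg hfg. apply quadratic_discriminant. intros l.
  replace (l ^ 2 * RInt (fun x => f x ^ 2) a b - 2 * l * RInt (fun x => f x * g x) a b
           + RInt (fun x => g x ^ 2) a b)
    with (l ^ 2 * RInt (fun x => f x ^ 2) a b + - 2 * l * RInt (fun x => f x * g x) a b
          + RInt (fun x => g x ^ 2) a b) by ring.
  rewrite <- (RInt_lin (fun x => f x ^ 2) (fun x => f x * g x) (fun x => g x ^ 2) a b (l ^ 2) (- 2 * l))
    by auto.
  apply RInt_ge_0; auto.
  - apply ex_RInt_lin; auto.
  - intros x _.
    replace (l ^ 2 * f x ^ 2 + -2 * l * (f x * g x) + g x ^ 2) with ((l * f x - g x) ^ 2) by ring.
    apply pow2_ge_0.
Qed.

Lemma RInt_power r s t : 0 < r -> 0 < s <= t ->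
  RInt (fun w => Rpower w (- r - 1)) s t = (Rpower s (- r) - Rpower t (- r)) / r.
Proof.
  intros hr hst. apply is_RInt_unique.
  replace ((Rpower s (- r) - Rpower t (- r)) / r)
    with (minus ((fun w => - / r * Rpower w (- r)) t) ((fun w => - / r * Rpower w (- r)) s))
    by (unfold minus, plus, opp; simpl; field; lra).
  apply (@is_RInt_derive R_CompleteNormedModule (fun w => - / r * Rpower w (- r))
    (fun w => Rpower w (- r - 1))).
  - intros x hx. rewrite Rmin_left, Rmax_right in hx by lra.
    replace (Rpower x (- r - 1)) with (- / r * (- r * Rpower x (- r - 1))) by (field; lra).
    apply is_derive_scal. apply is_derive_Reals. apply derivable_pt_lim_power. lra.
  - intros x hx. rewrite Rmin_left, Rmax_right in hx by lra. apply cont_Rpower. lra.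
Qed.

(* Cauchy-Schwarz with the weights w^(-(r+1)/2) and w^((r+1)/2): for V continuous,
   (int_s^t V)^2 <= (s^(-r) - t^(-r))/r * int_s^t w^(r+1) V(w)^2 dw. *)
Lemma RInt_weighted_cauchy_schwarz (V : R -> R) r s t : 0 < r -> 0 < s <= t ->
  (forall x, s <= x <= t -> continuous V x) ->
  (RInt V s t) ^ 2
  <= (Rpower s (- r) - Rpower t (- r)) / r * RInt (fun w => Rpower w (r + 1) * V w ^ 2) s t.
Proof.
  intros hr hst hc.
  set (f := fun w => Rpower w (- (r + 1) / 2)).
  set (g := fun w => Rpower w ((r + 1) / 2) * V w).
  assert (hcf : forall x, s <= x <= t -> continuous f x) by (intros; apply cont_Rpower; lra).
  assert (hcg : forall x, s <= x <= t -> continuous g x)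
    by (intros; apply cont_mult; [apply cont_Rpower; lra| auto]).
  assert (e1 : RInt V s t = RInt (fun x => f x * g x) s t).
  { apply RInt_extR. intros x hx. rewrite Rmin_left, Rmax_right in hx by lra. unfold f, g.
    rewrite <- Rmult_assoc, <- Rpower_plus. replace (- (r + 1) / 2 + (r + 1) / 2) with 0 by field.
    rewrite Rpower_O by lra. ring. }
  assert (e2 : RInt (fun x => f x ^ 2) s t = RInt (fun w => Rpower w (- r - 1)) s t).
  { apply RInt_extR. intros x hx. rewrite Rmin_left, Rmax_right in hx by lra. unfold f.
    simpl. rewrite Rmult_1_r, <- Rpower_plus. f_equal. field. }
  assert (e3 : RInt (fun x => g x ^ 2) s t = RInt (fun w => Rpower w (r + 1) * V w ^ 2) s t).
  { apply RInt_extR. intros x hx. rewrite Rmin_left, Rmax_right in hx by lra. unfold g.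
    replace ((Rpower x ((r + 1) / 2) * V x) ^ 2)
      with ((Rpower x ((r + 1) / 2) * Rpower x ((r + 1) / 2)) * V x ^ 2) by ring.
    rewrite <- Rpower_plus. f_equal. f_equal. field. }
  rewrite e1, <- RInt_power, <- e2, <- e3 by lra.
  apply RInt_cauchy_schwarz; [lra| | |]; apply ex_RInt_cont; try lra; intros x hx.
  - apply cont_sq; auto.
  - apply cont_sq; auto.
  - apply cont_mult; auto.
Qed.

Lemma increment_hardy (W V : R -> R) r s t : 0 < r -> 0 < s <= t ->
  (forall x, s <= x <= t -> is_derive W x (V x)) ->
  (forall x, s <= x <= t -> continuous V x) ->
  Rpower s r * (W t - W s) ^ 2 <= / r * RInt (fun w => Rpower w (r + 1) * V w ^ 2) s t.
Proof.
  intros hr hst hd hc.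
  rewrite <- (RInt_derive W V s t) by (auto; lra).
  pose proof (RInt_weighted_cauchy_schwarz V r s t hr hst hc) as hcs.
  set (J := RInt (fun w => Rpower w (r + 1) * V w ^ 2) s t) in *.
  assert (hJ : 0 <= J).
  { unfold J. apply RInt_ge_0; [lra| |].
    - apply ex_RInt_cont; [lra|]. intros; apply cont_mult; [apply cont_Rpower; lra| apply cont_sq; auto].
    - intros x hx. apply Rmult_le_pos; [left; apply Rpower_pos| apply pow2_ge_0]. }
  assert (hst2 : Rpower s (- r) - Rpower t (- r) <= Rpower s (- r))
    by (pose proof (Rpower_pos t (- r)); lra).
  assert (hsr : Rpower s r * Rpower s (- r) = 1).
  { rewrite <- Rpower_plus. replace (r + - r) with 0 by ring. apply Rpower_O. lra. }
  pose proof (Rpower_pos s r).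
  apply Rle_trans with (Rpower s r * (Rpower s (- r) / r * J)).
  - apply Rmult_le_compat_l; [lra|]. eapply Rle_trans; [exact hcs|].
    apply Rmult_le_compat_r; auto. unfold Rdiv.
    apply Rmult_le_compat_r; [left; apply Rinv_0_lt_compat; lra| lra].
  - right. replace (Rpower s r * (Rpower s (- r) / r * J))
      with ((Rpower s r * Rpower s (- r)) * / r * J) by (field; lra).
    rewrite hsr. ring.
Qed.

Lemma continuous_bounded01 (phi : R -> R) : (forall x, continuous phi x) ->
  exists M, forall s, 0 <= s <= 1 -> phi s <= M.
Proof.
  intros hc. destruct (continuity_ab_maj phi 0 1) as [Mx [h1 h2]]; [lra| |].
  - intros c hc'. apply continuity_pt_filterlim. apply hc.
  - exists (phi Mx). auto.
Qed.

Lemma rpow_Rpower s a : 0 < s -> rpow s a = Rpower s a.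
Proof. intros h. unfold rpow. destruct (Rlt_dec 0 s); [auto| lra]. Qed.

Lemma Rpower_le1 s a : 0 < s <= 1 -> 0 <= a -> Rpower s a <= 1.
Proof.
  intros hs ha. rewrite <- (Rpower_base1 a). apply Rle_Rpower_l; lra.
Qed.

Lemma Rint_RInt g a b : ex_RInt g a b -> Rint g a b = RInt g a b.
Proof.
  intros he. unfold Rint.
  destruct (epsilon_spec (inhabits 0)
    (fun I => exists pr : Riemann_integrable g a b, RiemannInt pr = I)) as [pr hpr].
  { exists (RiemannInt (ex_RInt_Reals_0 g a b he)). exists (ex_RInt_Reals_0 g a b he). auto. }
  rewrite <- hpr. symmetry. apply RInt_Reals.
Qed.

Definition good01 (h : R -> R) : Prop :=
  (forall a, 0 < a <= 1 -> ex_RInt h a 1) /\ (forall s, 0 < s <= 1 -> 0 <= h s).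

Lemma good01_RInt_antitone h a b : good01 h -> 0 < a <= b -> b <= 1 -> RInt h b 1 <= RInt h a 1.
Proof.
  intros [hi hn] hab hb.
  assert (hab' : ex_RInt h a b) by (apply (ex_RInt_Chasles_1 h a b 1); [lra| apply hi; lra]).
  assert (hb1 : ex_RInt h b 1) by (apply hi; lra).
  rewrite <- (RInt_Chasles h a b 1 hab' hb1).
  assert (0 <= RInt h a b) by (apply RInt_ge_0; auto; [lra| intros; apply hn; lra]).
  unfold plus; simpl. lra.
Qed.

Definition Int01_limit (h : R -> R) (I : R) := forall eps, 0 < eps -> exists delta, 0 < delta /\
     forall a, 0 < a < delta -> Rabs (Rint h a 1 - I) < eps.

Lemma Int01_limit_unique h I1 I2 : Int01_limit h I1 -> Int01_limit h I2 -> I1 = I2.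
Proof.
  intros h1 h2. destruct (Req_dec I1 I2) as [e|ne]; auto.
  set (eps := Rabs (I1 - I2) / 2).
  assert (he : 0 < eps) by (unfold eps; apply Rdiv_lt_0_compat; [apply Rabs_pos_lt; lra| lra]).
  destruct (h1 eps he) as [d1 [hd1 k1]]. destruct (h2 eps he) as [d2 [hd2 k2]].
  set (a := Rmin d1 d2 / 2).
  assert (ha : 0 < a) by (unfold a; apply Rdiv_lt_0_compat; [apply Rmin_glb_lt|]; lra).
  assert (ha1 : a < d1) by (unfold a; pose proof (Rmin_l d1 d2); lra).
  assert (ha2 : a < d2) by (unfold a; pose proof (Rmin_r d1 d2); lra).
  specialize (k1 a ltac:(lra)). specialize (k2 a ltac:(lra)).
  pose proof (Rabs_triang (I1 - Rint h a 1) (Rint h a 1 - I2)) as htri.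
  replace (I1 - Rint h a 1 + (Rint h a 1 - I2)) with (I1 - I2) in htri by ring.
  rewrite <- Rabs_Ropp in k1. replace (- (Rint h a 1 - I1)) with (I1 - Rint h a 1) in k1 by ring.
  unfold eps in *. lra.
Qed.

Lemma Int01_sup h M : good01 h -> (forall a, 0 < a <= 1 -> RInt h a 1 <= M) ->
  (forall a, 0 < a <= 1 -> RInt h a 1 <= Int01 h) /\
  (forall M', (forall a, 0 < a <= 1 -> RInt h a 1 <= M') -> Int01 h <= M').
Proof.
  intros hg hM.
  set (E := fun y => exists a, 0 < a <= 1 /\ y = RInt h a 1).
  destruct (completeness E) as [L [hL1 hL2]].
  { exists M. intros y [a [ha ->]]. apply hM; auto. }
  { exists (RInt h 1 1). exists 1. split; [lra| auto]. }
  assert (hp : Int01_limit h L).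
  { intros eps heps.
    assert (hex : exists a0, 0 < a0 <= 1 /\ L - eps < RInt h a0 1).
    { apply NNPP. intros hn.
      assert (hub : is_upper_bound E (L - eps)).
      { intros y [a [ha ->]]. apply Rnot_lt_le. intros hlt. apply hn. exists a. split; auto. }
      specialize (hL2 _ hub). lra. }
    destruct hex as [a0 [ha0 hlt]].
    exists a0. split; [lra|]. intros a ha.
    rewrite Rint_RInt by (apply (proj1 hg); lra).
    assert (h1 : RInt h a 1 <= L) by (apply hL1; exists a; split; auto; lra).
    assert (h2 : RInt h a0 1 <= RInt h a 1) by (apply good01_RInt_antitone; auto; lra).
    unfold Rabs. destruct Rcase_abs; lra. }
  assert (hI : Int01 h = L).
  { unfold Int01. apply (Int01_limit_unique h); [|exact hp].
    apply (epsilon_spec (inhabits 0) (fun I => Int01_limit h I)). exists L. exact hp. }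
  rewrite hI. split.
  - intros a ha. apply hL1. exists a. auto.
  - intros M' hM'. apply hL2. intros y [a [ha ->]]. apply hM'; auto.
Qed.

Lemma sup01_le (phi : R -> R) M : 0 <= M -> (forall s, 0 <= s <= 1 -> phi s <= M) ->
  epsilon (inhabits 0) (fun M0 => is_lub (fun y => exists s, 0 <= s <= 1 /\ y = phi s) M0) <= M.
Proof.
  intros hM h.
  destruct (completeness (fun y => exists s, 0 <= s <= 1 /\ y = phi s)) as [L hL].
  { exists M. intros y [s [hs ->]]. apply h; auto. }
  { exists (phi 0). exists 0. split; [lra| auto]. }
  pose proof (epsilon_spec (inhabits 0)
    (fun M0 => is_lub (fun y => exists s, 0 <= s <= 1 /\ y = phi s) M0) (ex_intro _ L hL)) as [_ h2].
  apply h2. intros y [s [hs ->]]. apply h; auto.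
Qed.

Lemma good01_weighted (h phi : R -> R) e : (forall x, continuous phi x) -> (forall s, 0 <= phi s) ->
  (forall s, 0 < s <= 1 -> h s = Rpower s e * phi s) ->
  good01 h /\ (forall a, 0 < a <= 1 -> RInt h a 1 = RInt (fun s => Rpower s e * phi s) a 1) /\
  (forall a b, 0 < a <= b -> ex_RInt (fun s => Rpower s e * phi s) a b).
Proof.
  intros hc hn he.
  assert (hex : forall a b, 0 < a <= b -> ex_RInt (fun s => Rpower s e * phi s) a b).
  { intros a b hab. apply ex_RInt_cont; [lra|]. intros x hx.
    apply cont_mult; [apply cont_Rpower; lra| auto]. }
  assert (heq : forall a, 0 < a <= 1 -> RInt h a 1 = RInt (fun s => Rpower s e * phi s) a 1).
  { intros a ha. apply RInt_extR. intros x hx. rewrite Rmin_left, Rmax_right in hx by lra. apply he; lra. }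
  split; [split|split]; auto.
  - intros a ha. apply (ex_RInt_extR (fun s => Rpower s e * phi s)).
    + intros x hx. rewrite Rmin_left, Rmax_right in hx by lra. symmetry. apply he; lra.
    + apply hex; lra.
  - intros s hs. rewrite he by auto. apply Rmult_le_pos; [left; apply Rpower_pos| auto].
Qed.

(* They turn the one-sided derivatives [deriv01] into Coquelicot derivatives. *)
Definition clamp01 (s : R) : R := Rmax 0 (Rmin 1 s).

Definition extend_const (g : R -> R) (s : R) : R := g (clamp01 s).

Definition extend_affine (g g' : R -> R) (s : R) : R := g (clamp01 s) + g' (clamp01 s) * (s - clamp01 s).

Lemma clamp_in01 s : 0 <= clamp01 s <= 1.
Proof. unfold clamp01, Rmax, Rmin. repeat destruct Rle_dec; lra. Qed.

Lemma clamp_id01 s : 0 <= s <= 1 -> clamp01 s = s.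
Proof. intros h. unfold clamp01, Rmax, Rmin. repeat destruct Rle_dec; lra. Qed.

Lemma clamp_lipschitz x y : Rabs (clamp01 y - clamp01 x) <= Rabs (y - x).
Proof.
  unfold clamp01, Rmax, Rmin. repeat destruct Rle_dec; unfold Rabs; repeat destruct Rcase_abs; lra.
Qed.

Lemma extend_const_id g s : 0 <= s <= 1 -> extend_const g s = g s.
Proof. intros h. unfold extend_const. rewrite clamp_id01; auto. Qed.

Lemma extend_affine_id g g' s : 0 <= s <= 1 -> extend_affine g g' s = g s.
Proof. intros h. unfold extend_affine. rewrite clamp_id01 by auto. ring. Qed.

Definition cont01 (g : R -> R) (x : R) : Prop :=
  forall eps, 0 < eps -> exists delta, 0 < delta /\
    forall y, 0 <= y <= 1 -> Rabs (y - x) < delta -> Rabs (g y - g x) < eps.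

Lemma deriv01_continuous g x l : 0 <= x <= 1 -> deriv01 g x l -> cont01 g x.
Proof.
  intros hx hd eps heps.
  destruct (hd 1 ltac:(lra)) as [d [hd0 hdd]].
  set (c := Rabs l + 1).
  assert (hc : 0 < c) by (unfold c; pose proof (Rabs_pos l); lra).
  exists (Rmin d (eps / c)). split.
  { apply Rmin_glb_lt; [lra| apply Rdiv_lt_0_compat; lra]. }
  intros y hy hyx.
  destruct (Req_dec y x) as [->|ne].
  { rewrite Rminus_diag, Rabs_R0. lra. }
  set (h := y - x).
  assert (hh : h <> 0) by (unfold h; lra).
  assert (hlt : Rabs h < d) by (eapply Rlt_le_trans; [exact hyx| apply Rmin_l]).
  assert (hlt2 : Rabs h < eps / c) by (eapply Rlt_le_trans; [exact hyx| apply Rmin_r]).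
  specialize (hdd h hh hlt ltac:(unfold h; lra)).
  replace (x + h) with y in hdd by (unfold h; ring).
  assert (hq : Rabs ((g y - g x) / h) < c).
  { unfold c. pose proof (Rabs_triang ((g y - g x) / h - l) l) as htri.
    replace ((g y - g x) / h - l + l) with ((g y - g x) / h) in htri by ring. lra. }
  assert (e : g y - g x = (g y - g x) / h * h) by (field; auto).
  rewrite e, Rabs_mult.
  assert (hp : 0 < Rabs h) by (apply Rabs_pos_lt; auto).
  apply Rle_lt_trans with (c * Rabs h).
  { apply Rmult_le_compat_r; lra. }
  apply (Rmult_lt_reg_r (/ c)); [apply Rinv_0_lt_compat; lra|].
  replace (c * Rabs h * / c) with (Rabs h) by (field; lra). exact hlt2.
Qed.

Lemma continuous_of_eps_delta g x : (forall eps, 0 < eps -> exists delta, 0 < delta /\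
    forall y, Rabs (y - x) < delta -> Rabs (g y - g x) < eps) -> continuous g x.
Proof.
  intros h. apply continuity_pt_filterlim.
  unfold continuity_pt, continue_in, limit1_in, limit_in. simpl. unfold R_dist.
  intros eps heps. destruct (h eps heps) as [d [hd hdd]]. exists d. split; [lra|].
  intros y [_ hy]. apply hdd. exact hy.
Qed.

Lemma extend_const_cont g : (forall x, 0 <= x <= 1 -> cont01 g x) ->
  forall x, continuous (extend_const g) x.
Proof.
  intros hg x. apply continuous_of_eps_delta. intros eps heps.
  destruct (hg (clamp01 x) (clamp_in01 x) eps heps) as [d [hd hdd]].
  exists d. split; auto. intros y hy. unfold extend_const.
  apply hdd; [apply clamp_in01|]. eapply Rle_lt_trans; [apply clamp_lipschitz| exact hy].
Qed.

Lemma extend_affine_derive g g' x : 0 <= x <= 1 -> deriv01 g x (g' x) ->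
  is_derive (extend_affine g g') x (g' x).
Proof.
  intros hx hd. apply is_derive_Reals. intros eps heps.
  destruct (hd eps heps) as [d [hd0 hdd]].
  (* a radius A keeping x + h in [0,1] on each side where x is interior *)
  assert (hA : exists A, 0 < A /\ (0 < x -> A <= x) /\ (x < 1 -> A <= 1 - x)).
  { destruct (Rlt_dec 0 x); destruct (Rlt_dec x 1).
    - exists (Rmin x (1 - x)). split; [apply Rmin_glb_lt; lra|].
      split; intros; [apply Rmin_l| apply Rmin_r].
    - exists x. split; [lra|]. split; intros; lra.
    - exists (1 - x). split; [lra|]. split; intros; lra.
    - lra. }
  destruct hA as [A [hA0 [hA1 hA2]]].
  set (d' := Rmin d A).
  assert (hd' : 0 < d') by (apply Rmin_glb_lt; lra).
  exists (mkposreal d' hd'). intros h hh hlt. simpl in hlt.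
  assert (hltd : Rabs h < d) by (eapply Rlt_le_trans; [exact hlt| apply Rmin_l]).
  assert (hltA : Rabs h < A) by (eapply Rlt_le_trans; [exact hlt| apply Rmin_r]).
  rewrite (extend_affine_id g g' x hx).
  destruct (Rle_dec 0 (x + h)) as [h0|h0]; destruct (Rle_dec (x + h) 1) as [h1|h1].
  - rewrite extend_affine_id by lra. apply hdd; auto.
  - (* x + h > 1 forces x = 1, where the extension is affine with slope g' 1 *)
    assert (ex : x = 1).
    { destruct (Rlt_dec x 1) as [lt|nlt]; [|lra].
      specialize (hA2 lt). unfold Rabs in hltA; destruct Rcase_abs in hltA; lra. }
    subst x. unfold extend_affine.
    assert (hc : clamp01 (1 + h) = 1) by (unfold clamp01, Rmin, Rmax; repeat destruct Rle_dec; lra).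
    rewrite hc. replace ((g 1 + g' 1 * (1 + h - 1) - g 1) / h - g' 1) with 0 by (field; auto).
    rewrite Rabs_R0. lra.
  - (* symmetrically, x + h < 0 forces x = 0 *)
    assert (ex : x = 0).
    { destruct (Rlt_dec 0 x) as [lt|nlt]; [|lra].
      specialize (hA1 lt). unfold Rabs in hltA; destruct Rcase_abs in hltA; lra. }
    subst x. unfold extend_affine.
    assert (hc : clamp01 (0 + h) = 0) by (unfold clamp01, Rmin, Rmax; repeat destruct Rle_dec; lra).
    rewrite hc. replace ((g 0 + g' 0 * (0 + h - 0) - g 0) / h - g' 0) with 0 by (field; auto).
    rewrite Rabs_R0. lra.
  - lra.
Qed.

(** * The continuous inequalities (part (a))

    For a smooth [F] we work with the coordinates of [F m] extended
    constantly to R ([coord]), with the coordinates of [F m] extended affinely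
    ([coord_affine], whose derivative on [0,1] is [coord (S m)]), and with
    [dsq m s = |F^(m)(s)|^2].  Then:
    - [increment_hardy] gives [s^r |F^(m)(t) - F^(m)(s)|^2 <= ||F||^2_{r+1,m+1} / r];
    - comparing [s] with every [t] in [1/2, 1] and integrating in [t] bounds
      [s^r |F^(m)(s)|^2] by the right-hand side (the sup estimate); with
      [F^(m)(1) = 0] one takes [t = 1] directly;
    - differentiating [s^r |F^(m)(s)|^2] and completing a square bounds the
      (r-1)-weighted integral by [|F^(m)(1)|^2 + ||F||^2_{r+1,m+1}], and
      [|F^(m)(1)|^2] is controlled by the sup estimate. *)

Definition coord (F : nat -> R -> vec) (m i : nat) : R -> R :=
  extend_const (fun t => F m t i).
Definition coord_affine (F : nat -> R -> vec) (m i : nat) : R -> R :=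
  extend_affine (fun t => F m t i) (fun t => F (S m) t i).
Definition dsq (d : nat) (F : nat -> R -> vec) (m : nat) (s : R) : R :=
  sum0 d (fun i => coord F m i s ^ 2).

Lemma derive_mul (f g : R -> R) x df dg : is_derive f x df -> is_derive g x dg ->
  is_derive (fun y => f y * g y) x (df * g x + f x * dg).
Proof. intros h1 h2. exact (is_derive_mult f g x df dg h1 h2 Rmult_comm). Qed.

Lemma derive_sq (f : R -> R) x df : is_derive f x df -> is_derive (fun y => f y ^ 2) x (2 * df * f x).
Proof.
  intros h. pose proof (is_derive_pow f 2 x df h) as h'.
  replace (INR 2 * df * f x ^ Init.Nat.pred 2) with (2 * df * f x) in h' by (simpl; ring).
  exact h'.
Qed.

Section SmoothFunction.

Variables (d : nat) (F : nat -> R -> vec).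
Hypothesis hs : smooth01 d F.

Lemma coord_id m i s : 0 <= s <= 1 -> coord F m i s = F m s i.
Proof. apply extend_const_id. Qed.

Lemma coord_affine_id m i s : 0 <= s <= 1 -> coord_affine F m i s = F m s i.
Proof. apply extend_affine_id. Qed.

Lemma coord_continuous m i x : (i < d)%nat -> continuous (coord F m i) x.
Proof.
  intros hi. apply extend_const_cont. intros y hy.
  apply (deriv01_continuous (fun t => F m t i) y (F (S m) y i)); auto.
Qed.

Lemma coord_affine_derive m i x : (i < d)%nat -> 0 <= x <= 1 ->
  is_derive (coord_affine F m i) x (coord F (S m) i x).
Proof. intros hi hx. rewrite coord_id by auto. apply extend_affine_derive; auto. Qed.

Lemma coord_affine_continuous m i x : (i < d)%nat -> 0 <= x <= 1 ->
  continuous (coord_affine F m i) x.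
Proof.
  intros hi hx. apply (@ex_derive_continuous R_AbsRing R_NormedModule).
  eexists. apply coord_affine_derive; auto.
Qed.

Lemma dsq_continuous m x : continuous (dsq d F m) x.
Proof.
  apply (cont_sum0 d (fun i s => coord F m i s ^ 2)). intros i hi.
  apply cont_sq, coord_continuous; auto.
Qed.

Lemma dsq_nonneg m s : 0 <= dsq d F m s.
Proof. apply sum0_nonneg. intros; apply pow2_ge_0. Qed.

Lemma dsq_sqnorm m s : 0 <= s <= 1 -> sqnorm d (F m s) = dsq d F m s.
Proof. intros h. apply sum0_ext. intros i hi. rewrite coord_id; auto. Qed.

Lemma dsq_affine m s : 0 <= s <= 1 -> sum0 d (fun i => coord_affine F m i s ^ 2) = dsq d F m s.
Proof. intros h. apply sum0_ext. intros i hi. rewrite coord_id, coord_affine_id; auto. Qed.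

Lemma cnorm2_integrand m e :
  good01 (fun s => rpow s e * sqnorm d (F m s)) /\
  (forall a, 0 < a <= 1 ->
    RInt (fun s => rpow s e * sqnorm d (F m s)) a 1 = RInt (fun s => Rpower s e * dsq d F m s) a 1) /\
  (forall a b, 0 < a <= b -> ex_RInt (fun s => Rpower s e * dsq d F m s) a b).
Proof.
  apply good01_weighted; [apply dsq_continuous| apply dsq_nonneg|].
  intros s hs1. rewrite rpow_Rpower, dsq_sqnorm by lra. reflexivity.
Qed.

Lemma cnorm2_le m e M :
  (forall a, 0 < a <= 1 -> RInt (fun s => Rpower s e * dsq d F m s) a 1 <= M) -> cnorm2 d e m F <= M.
Proof.
  intros hM. destruct (cnorm2_integrand m e) as [hg [heq _]].
  assert (hM' : forall a, 0 < a <= 1 -> RInt (fun s => rpow s e * sqnorm d (F m s)) a 1 <= M)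
    by (intros a ha; rewrite heq by auto; apply hM; auto).
  apply (proj2 (Int01_sup _ M hg hM') M hM').
Qed.

Lemma cnorm2_partial m e a : 0 <= e -> 0 < a <= 1 ->
  RInt (fun s => Rpower s e * dsq d F m s) a 1 <= cnorm2 d e m F.
Proof.
  intros he ha. destruct (cnorm2_integrand m e) as [hg [heq hex]].
  destruct (continuous_bounded01 _ (dsq_continuous m)) as [M hM].
  assert (0 <= M) by (pose proof (hM 0 ltac:(lra)); pose proof (dsq_nonneg m 0); lra).
  destruct (Int01_sup (fun s => rpow s e * sqnorm d (F m s)) M hg) as [h1 _].
  { intros b hb. rewrite heq by auto.
    apply Rle_trans with ((1 - b) * M); [|nra].
    apply RInt_le_const; [lra| apply hex; lra|]. intros x hx.
    pose proof (Rpower_le1 x e ltac:(lra) he). pose proof (dsq_nonneg m x).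
    pose proof (hM x ltac:(lra)). pose proof (Rpower_pos x e). nra. }
  rewrite <- heq by auto. apply h1; auto.
Qed.

Lemma cnorm2_nonneg m e : 0 <= e -> 0 <= cnorm2 d e m F.
Proof.
  intros he. pose proof (cnorm2_partial m e 1 he ltac:(lra)) as h.
  rewrite RInt_point in h. exact h.
Qed.

Lemma csup2_le m r M : 0 <= M -> (forall s, 0 < s <= 1 -> Rpower s r * dsq d F m s <= M) ->
  csup2 d r m F <= M.
Proof.
  intros hM0 hM. apply (sup01_le (fun s => rpow s r * sqnorm d (F m s))); auto.
  intros s hs1. destruct (Req_dec s 0) as [->|ne].
  - unfold rpow. destruct (Rlt_dec 0 0); [lra|]. rewrite Rmult_0_l. auto.
  - rewrite rpow_Rpower, dsq_sqnorm by lra. apply hM. lra.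
Qed.

Lemma increment_hardy_vec m r s t : 0 < r -> 0 < s <= t -> t <= 1 ->
  Rpower s r * sum0 d (fun i => (coord_affine F m i t - coord_affine F m i s) ^ 2)
  <= / r * cnorm2 d (r + 1) (S m) F.
Proof.
  intros hr hst ht1.
  set (V := fun i w => Rpower w (r + 1) * coord F (S m) i w ^ 2).
  rewrite <- sum0_scal.
  eapply Rle_trans.
  { apply (sum0_le d _ (fun i => / r * RInt (V i) s t)).
    intros i hi. apply increment_hardy; auto.
    - intros x hx. apply coord_affine_derive; auto. lra.
    - intros x hx. apply coord_continuous; auto. }
  rewrite sum0_scal. apply Rmult_le_compat_l; [left; apply Rinv_0_lt_compat; lra|].
  assert (hexi : forall i, (i < d)%nat -> ex_RInt (V i) s t).
  { intros i hi. apply ex_RInt_cont; [lra|]. intros x hx.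
    apply cont_mult; [apply cont_Rpower; lra| apply cont_sq, coord_continuous; auto]. }
  rewrite <- (proj2 (RInt_sum0 d V s t hexi)).
  rewrite (RInt_extR _ (fun w => Rpower w (r + 1) * dsq d F (S m) w))
    by (intros x hx; unfold V, dsq; rewrite <- sum0_scal; auto).
  eapply Rle_trans;
    [apply (RInt_le_extend _ s t 1); [lra| apply (cnorm2_integrand (S m) (r + 1)); lra|]|].
  - intros x hx. apply Rmult_le_pos; [left; apply Rpower_pos| apply dsq_nonneg].
  - apply cnorm2_partial; lra.
Qed.

Lemma pointwise_compare_cont m r s t : 0 < r -> 0 < s <= 1 -> / 2 <= t <= 1 ->
  Rpower s r * dsq d F m s
  <= 2 * Rpower 2 r * (Rpower t r * dsq d F m t) + 2 * Rpower 2 r / r * cnorm2 d (r + 1) (S m) F.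
Proof.
  intros hr hs1 ht.
  pose proof (cnorm2_nonneg (S m) (r + 1) ltac:(lra)) as hJ0.
  set (JC := cnorm2 d (r + 1) (S m) F) in *.
  set (D := sum0 d (fun i => (coord_affine F m i t - coord_affine F m i s) ^ 2)).
  assert (hD : 0 <= D) by (apply sum0_nonneg; intros; apply pow2_ge_0).
  assert (h2r : 1 <= Rpower 2 r) by (rewrite <- (Rpower_O 2) by lra; apply Rle_Rpower; lra).
  assert (h2t : 1 <= Rpower 2 r * Rpower t r).
  { rewrite Rpower_mult_distr by lra. rewrite <- (Rpower_base1 r). apply Rle_Rpower_l; lra. }
  assert (hsr : Rpower s r <= 1) by (apply Rpower_le1; lra).
  pose proof (Rpower_pos s r). pose proof (Rpower_pos t r).
  assert (hJr : 0 <= JC / r) by (unfold Rdiv; apply Rmult_le_pos; [lra| left; apply Rinv_0_lt_compat; lra]).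
  assert (hphi : dsq d F m s <= 2 * dsq d F m t + 2 * D).
  { rewrite <- (dsq_affine m s), <- (dsq_affine m t) by lra.
    unfold D. rewrite <- !sum0_scal, <- sum0_plus.
    apply sum0_le. intros i hi.
    pose proof (pow2_ge_0 (coord_affine F m i s - 2 * coord_affine F m i t)). nra. }
  assert (hsD : Rpower s r * D <= Rpower 2 r * (JC / r)).
  { destruct (Rle_dec s t) as [hle|hlt].
    - pose proof (increment_hardy_vec m r s t hr ltac:(lra) ltac:(lra)) as h. fold D JC in h.
      unfold Rdiv. rewrite Rmult_comm in h. nra.
    - pose proof (increment_hardy_vec m r t s hr ltac:(lra) ltac:(lra)) as h. fold JC in h.
      replace (sum0 d (fun i => (coord_affine F m i s - coord_affine F m i t) ^ 2)) with D in h
        by (unfold D; apply sum0_ext; intros; ring).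
      assert (Rpower s r * D <= Rpower 2 r * Rpower t r * D) by (apply Rmult_le_compat_r; lra).
      unfold Rdiv. rewrite (Rmult_comm JC). nra. }
  assert (Rpower s r * dsq d F m t <= Rpower 2 r * (Rpower t r * dsq d F m t)).
  { pose proof (dsq_nonneg m t). rewrite <- Rmult_assoc. apply Rmult_le_compat_r; lra. }
  assert (Rpower s r * dsq d F m s <= Rpower s r * (2 * dsq d F m t + 2 * D))
    by (apply Rmult_le_compat_l; lra).
  replace (2 * Rpower 2 r / r * JC) with (2 * (Rpower 2 r * (JC / r))) by (field; lra).
  lra.
Qed.

(* The sup estimate: average pointwise_compare_cont over t in [1/2, 1]. *)
Lemma pointwise_bound_cont m r s : 0 < r -> 0 < s <= 1 ->
  Rpower s r * dsq d F m s
  <= 2 * (2 * Rpower 2 r) * cnorm2 d r m F + 2 * Rpower 2 r / r * cnorm2 d (r + 1) (S m) F.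
Proof.
  intros hr hs1.
  set (JC := cnorm2 d (r + 1) (S m) F).
  set (K := 2 * Rpower 2 r). set (c0 := Rpower s r * dsq d F m s).
  set (c1 := 2 * Rpower 2 r / r * JC).
  assert (hexB : ex_RInt (fun t => Rpower t r * dsq d F m t) (/ 2) 1)
    by (apply (cnorm2_integrand m r); lra).
  assert (hint : RInt (fun _ => c0) (/ 2) 1 <=
      RInt (fun t => K * (Rpower t r * dsq d F m t) + c1 * (fun _ => 1) t + (fun _ => 0) t) (/ 2) 1).
  { apply RInt_le; [lra| apply ex_RInt_constR| |].
    - apply ex_RInt_lin; [exact hexB| apply ex_RInt_constR| apply ex_RInt_constR].
    - intros t ht. unfold c0, c1, K.
      pose proof (pointwise_compare_cont m r s t hr hs1 ltac:(lra)) as hc. fold JC in hc. lra. }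
  rewrite RInt_constR, RInt_lin, !RInt_constR in hint by (auto; apply ex_RInt_constR).
  assert (RInt (fun t => Rpower t r * dsq d F m t) (/ 2) 1 <= cnorm2 d r m F)
    by (apply cnorm2_partial; lra).
  assert (hK : 0 < K) by (unfold K; pose proof (Rpower_pos 2 r); lra).
  assert (K * RInt (fun t => Rpower t r * dsq d F m t) (/ 2) 1 <= K * cnorm2 d r m F)
    by (apply Rmult_le_compat_l; lra).
  assert (c1 = K / r * JC) by (unfold c1, K; field; lra).
  lra.
Qed.

(* The sup estimate when F^(m)(1) = 0: compare with t = 1 directly. *)
Lemma pointwise_bound_cont_vanishing m r s : 0 < r -> 0 < s <= 1 ->
  (forall i, (i < d)%nat -> F m 1 i = 0) ->
  Rpower s r * dsq d F m s <= / r * cnorm2 d (r + 1) (S m) F.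
Proof.
  intros hr hs1 hbc.
  pose proof (increment_hardy_vec m r s 1 hr ltac:(lra) ltac:(lra)) as h.
  replace (sum0 d (fun i => (coord_affine F m i 1 - coord_affine F m i s) ^ 2)) with (dsq d F m s) in h;
    auto.
  rewrite <- (dsq_affine m s) by lra. apply sum0_ext. intros i hi.
  rewrite (coord_affine_id m i 1), hbc by (auto; lra). ring.
Qed.

Definition weighted_sq (m : nat) (r x : R) : R :=
  Rpower x r * sum0 d (fun i => coord_affine F m i x ^ 2).

Definition weighted_sq_deriv (m : nat) (r x : R) : R :=
  r * Rpower x (r - 1) * sum0 d (fun i => coord_affine F m i x ^ 2)
  + Rpower x r * sum0 d (fun i => 2 * coord F (S m) i x * coord_affine F m i x).

Lemma weighted_sq_derive m r x : 0 < x <= 1 -> is_derive (weighted_sq m r) x (weighted_sq_deriv m r x).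
Proof.
  intros hx.
  apply (derive_mul (fun y => Rpower y r) (fun y => sum0 d (fun i => coord_affine F m i y ^ 2))).
  - apply is_derive_Reals, derivable_pt_lim_power. lra.
  - apply (derive_sum0 d (fun i y => coord_affine F m i y ^ 2)
      (fun i y => 2 * coord F (S m) i y * coord_affine F m i y)).
    intros i hi. apply derive_sq, coord_affine_derive; auto. lra.
Qed.

Lemma weighted_sq_deriv_continuous m r x : 0 < x <= 1 -> continuous (weighted_sq_deriv m r) x.
Proof.
  intros hx. unfold weighted_sq_deriv.
  apply cont_plus; apply cont_mult.
  - apply cont_mult; [apply continuous_const| apply cont_Rpower; lra].
  - apply (cont_sum0 d (fun i y => coord_affine F m i y ^ 2)). intros i hi.
    apply cont_sq, coord_affine_continuous; auto. lra.
  - apply cont_Rpower; lra.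
  - apply (cont_sum0 d (fun i y => 2 * coord F (S m) i y * coord_affine F m i y)). intros i hi.
    apply cont_mult; [apply cont_mult; [apply continuous_const| apply coord_continuous; auto]|].
    apply coord_affine_continuous; auto. lra.
Qed.

(* Completing a square: dH(x) >= (r/2) x^(r-1) |W(x)|^2 - (2/r) x^(r+1) |V(x)|^2. *)
Lemma weighted_sq_deriv_lower m r x : 0 < r -> 0 < x <= 1 ->
  r / 2 * (Rpower x (r - 1) * dsq d F m x) - 2 / r * (Rpower x (r + 1) * dsq d F (S m) x)
  <= weighted_sq_deriv m r x.
Proof.
  intros hr hx. unfold weighted_sq_deriv.
  rewrite <- (dsq_affine m x) by lra. unfold dsq.
  set (W := fun i => coord_affine F m i x). set (V := fun i => coord F (S m) i x).
  change (sum0 d (fun i => coord_affine F m i x ^ 2)) with (sum0 d (fun i => W i ^ 2)).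
  change (sum0 d (fun i => coord F (S m) i x ^ 2)) with (sum0 d (fun i => V i ^ 2)).
  change (sum0 d (fun i => 2 * coord F (S m) i x * coord_affine F m i x))
    with (sum0 d (fun i => 2 * V i * W i)).
  set (P := Rpower x (r - 1)). assert (hP : 0 < P) by apply Rpower_pos.
  assert (e1 : Rpower x r = P * x).
  { unfold P. replace r with ((r - 1) + 1) at 1 by ring. rewrite Rpower_plus, Rpower_1 by lra. auto. }
  assert (e2 : Rpower x (r + 1) = P * x ^ 2).
  { unfold P. replace (r + 1) with ((r - 1) + INR 2) by (simpl; ring).
    rewrite Rpower_plus, Rpower_pow by lra. auto. }
  rewrite e1, e2.
  assert (hsum : 0 <= sum0 d (fun i => r / 2 * W i ^ 2 + x * (2 * V i * W i) + 2 / r * x ^ 2 * V i ^ 2)).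
  { apply sum0_nonneg. intros i hi.
    replace (r / 2 * W i ^ 2 + x * (2 * V i * W i) + 2 / r * x ^ 2 * V i ^ 2)
      with (r / 2 * (W i + 2 / r * x * V i) ^ 2) by (field; lra).
    apply Rmult_le_pos; [lra| apply pow2_ge_0]. }
  rewrite !sum0_plus, !sum0_scal in hsum.
  pose proof (Rmult_le_pos P _ (Rlt_le _ _ hP) hsum). nra.
Qed.

(* Integrating weighted_sq_deriv_lower over [a, 1], with H(1) = |F^(m)(1)|^2, H(a) >= 0:
   int_a^1 s^(r-1) |F^(m)|^2 <= (2/r) (|F^(m)(1)|^2 + (2/r) ||F||^2_{r+1,m+1}). *)
Lemma lower_integral_bound m r a : 0 < r -> 0 < a <= 1 ->
  RInt (fun s => Rpower s (r - 1) * dsq d F m s) a 1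
  <= 2 / r * (dsq d F m 1 + 2 / r * cnorm2 d (r + 1) (S m) F).
Proof.
  intros hr ha.
  set (JC := cnorm2 d (r + 1) (S m) F).
  assert (hH1 : weighted_sq m r 1 = dsq d F m 1)
    by (unfold weighted_sq; rewrite Rpower_base1, Rmult_1_l; apply dsq_affine; lra).
  assert (hHa : 0 <= weighted_sq m r a).
  { apply Rmult_le_pos; [left; apply Rpower_pos| apply sum0_nonneg; intros; apply pow2_ge_0]. }
  assert (hexA : ex_RInt (fun s => Rpower s (r - 1) * dsq d F m s) a 1)
    by (apply (cnorm2_integrand m (r - 1)); lra).
  assert (hexC : ex_RInt (fun s => Rpower s (r + 1) * dsq d F (S m) s) a 1)
    by (apply (cnorm2_integrand (S m) (r + 1)); lra).
  assert (hle : RInt (fun x => (r / 2) * (Rpower x (r - 1) * dsq d F m x)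
        + (- (2 / r)) * (Rpower x (r + 1) * dsq d F (S m) x) + (fun _ => 0) x) a 1
      <= RInt (weighted_sq_deriv m r) a 1).
  { apply RInt_le; [lra| apply ex_RInt_lin; auto; apply ex_RInt_constR| |].
    - apply ex_RInt_cont; [lra|]. intros x hx. apply weighted_sq_deriv_continuous. lra.
    - intros x hx. pose proof (weighted_sq_deriv_lower m r x hr ltac:(lra)). lra. }
  assert (hftc : RInt (weighted_sq_deriv m r) a 1 = weighted_sq m r 1 - weighted_sq m r a).
  { apply RInt_derive; [lra| |]; intros x hx.
    - apply weighted_sq_derive. lra.
    - apply weighted_sq_deriv_continuous. lra. }
  rewrite RInt_lin, RInt_constR, hftc, hH1 in hle by (auto; apply ex_RInt_constR).
  assert (RInt (fun s => Rpower s (r + 1) * dsq d F (S m) s) a 1 <= JC) by (apply cnorm2_partial; lra).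
  apply (Rmult_le_reg_l (r / 2)); [lra|].
  replace (r / 2 * (2 / r * (dsq d F m 1 + 2 / r * JC))) with (dsq d F m 1 + 2 / r * JC) by (field; lra).
  assert (2 / r * RInt (fun s => Rpower s (r + 1) * dsq d F (S m) s) a 1 <= 2 / r * JC).
  { apply Rmult_le_compat_l; [|auto].
    unfold Rdiv; apply Rmult_le_pos; [lra| left; apply Rinv_0_lt_compat; lra]. }
  lra.
Qed.

End SmoothFunction.

Section ContinuousEstimates.

Variables (d : nat) (F : nat -> R -> vec) (r : R) (m : nat).
Hypothesis hs : smooth01 d F.
Hypothesis hr : 0 < r.

Local Notation P := (Rpower 2 r).
Local Notation JB := (cnorm2 d r m F).
Local Notation JC := (cnorm2 d (r + 1) (S m) F).

Lemma pointwise_estimate s : 0 < s <= 1 -> Rpower s r * dsq d F m s <= 4 * P * JB + 2 * P / r * JC.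
Proof. intros h. pose proof (pointwise_bound_cont d F hs m r s hr h). lra. Qed.

Lemma sup_estimate : csup2 d r m F <= 4 * P * JB + 2 * P / r * JC.
Proof.
  apply csup2_le; [|exact pointwise_estimate].
  pose proof (pointwise_estimate 1 ltac:(lra)). pose proof (dsq_nonneg d F m 1).
  pose proof (Rpower_pos 1 r). nra.
Qed.

(* The (r-1)-weighted estimate, using the sup estimate at s = 1. *)
Lemma lower_estimate : cnorm2 d (r - 1) m F <= 8 * P / r * JB + (4 * P + 4) / r ^ 2 * JC.
Proof.
  apply (cnorm2_le d F hs). intros a ha.
  eapply Rle_trans; [apply (lower_integral_bound d F hs); auto|].
  pose proof (pointwise_estimate 1 ltac:(lra)) as h1. rewrite Rpower_base1, Rmult_1_l in h1.
  assert (0 < / r) by (apply Rinv_0_lt_compat; lra).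
  apply Rle_trans with (2 / r * (4 * P * JB + 2 * P / r * JC + 2 / r * JC));
    [apply Rmult_le_compat_l; [unfold Rdiv; apply Rmult_le_pos|]; lra|].
  right. field. lra.
Qed.

Lemma sup_estimate_vanishing : (forall i, (i < d)%nat -> F m 1 i = 0) -> csup2 d r m F <= / r * JC.
Proof.
  intros hbc. apply csup2_le.
  - pose proof (cnorm2_nonneg d F hs (S m) (r + 1) ltac:(lra)).
    apply Rmult_le_pos; [left; apply Rinv_0_lt_compat|]; lra.
  - intros s h. apply pointwise_bound_cont_vanishing; auto.
Qed.

Lemma lower_estimate_vanishing : (forall i, (i < d)%nat -> F m 1 i = 0) ->
  cnorm2 d (r - 1) m F <= 4 / r ^ 2 * JC.
Proof.
  intros hbc. apply (cnorm2_le d F hs). intros a ha.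
  eapply Rle_trans; [apply (lower_integral_bound d F hs); auto|].
  replace (dsq d F m 1) with 0 by (symmetry; apply sum0_zero; intros i hi;
    rewrite coord_id, hbc by (auto; lra); ring).
  right. field. lra.
Qed.

End ContinuousEstimates.

Lemma le_combine X a b C u v : X <= a * u + b * v -> 0 <= u -> 0 <= v -> a <= C -> b <= C ->
  X <= C * (u + v).
Proof.
  intros h hu hv ha hb.
  assert (a * u <= C * u) by (apply Rmult_le_compat_r; auto).
  assert (b * v <= C * v) by (apply Rmult_le_compat_r; auto).
  lra.
Qed.

Definition cont_const (r : R) : R := 8 * Rpower 2 r * (1 + / r) + (4 * Rpower 2 r + 4) / r ^ 2 + / r.

Lemma continuous_part r m : 0 < r -> exists C, 0 <= C /\
    (forall (d : nat) (F : nat -> R -> vec), smooth01 d F ->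
       cnorm2 d (r - 1) m F <= C * (cnorm2 d r m F + cnorm2 d (r + 1) (S m) F) /\
       csup2 d r m F <= C * (cnorm2 d r m F + cnorm2 d (r + 1) (S m) F) /\
       ((forall i, (i < d)%nat -> F m 1 i = 0) ->
          cnorm2 d (r - 1) m F <= C * cnorm2 d (r + 1) (S m) F /\
          csup2 d r m F <= C * cnorm2 d (r + 1) (S m) F)).
Proof.
  intros hr. pose proof (Rpower_pos 2 r) as hP.
  assert (hi : 0 < / r) by (apply Rinv_0_lt_compat; lra).
  assert (hi2 : 0 < / r ^ 2) by (apply Rinv_0_lt_compat, pow_lt; lra).
  assert (0 <= Rpower 2 r * / r) by (apply Rmult_le_pos; lra).
  assert (0 <= Rpower 2 r * / r ^ 2) by (apply Rmult_le_pos; lra).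
  assert (hC : 0 <= cont_const r) by (unfold cont_const, Rdiv; nra).
  exists (cont_const r). split; [exact hC|].
  intros d F hs.
  pose proof (cnorm2_nonneg d F hs m r ltac:(lra)).
  pose proof (cnorm2_nonneg d F hs (S m) (r + 1) ltac:(lra)).
  split; [|split; [|intros hbc; split]].
  - apply (le_combine _ _ _ _ _ _ (lower_estimate d F r m hs hr)); auto; unfold cont_const, Rdiv; nra.
  - apply (le_combine _ _ _ _ _ _ (sup_estimate d F r m hs hr)); auto; unfold cont_const, Rdiv; nra.
  - apply (le_mul_weaken _ _ _ _ (lower_estimate_vanishing d F r m hs hr hbc)); auto.
    unfold cont_const, Rdiv; nra.
  - apply (le_mul_weaken _ _ _ _ (sup_estimate_vanishing d F r m hs hr hbc)); auto.
    unfold cont_const, Rdiv; nra.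
Qed.

Theorem theorem4p2 (r : R) (m : nat) (hr : 0 < r) :
  exists C : R,
    (* (a) continuous version *)
    (forall (d : nat) (F : nat -> R -> vec), smooth01 d F ->
       cnorm2 d (r - 1) m F <= C * (cnorm2 d r m F + cnorm2 d (r + 1) (S m) F) /\
       csup2 d r m F <= C * (cnorm2 d r m F + cnorm2 d (r + 1) (S m) F) /\
       ((forall i, (i < d)%nat -> F m 1 i = 0) ->
          cnorm2 d (r - 1) m F <= C * cnorm2 d (r + 1) (S m) F /\
          csup2 d r m F <= C * cnorm2 d (r + 1) (S m) F)) /\
    (* (b) discrete version, uniformly in n *)
    (forall (d n : nat) (f : nat -> vec), (1 <= n)%nat ->
       dnorm2 d n (r - 1) m f <= C * (dnorm2 d n r m f + dnorm2 d n (r + 1) (S m) f) /\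
       dsup2 d n r m f <= C * (dnorm2 d n r m f + dnorm2 d n (r + 1) (S m) f) /\
       ((forall i, (i < d)%nat -> nablapow n m f (n - m)%nat i = 0) ->
          dnorm2 d n (r - 1) m f <= C * dnorm2 d n (r + 1) (S m) f /\
          dsup2 d n r m f <= C * dnorm2 d n (r + 1) (S m) f)).
Proof.
  destruct (continuous_part r m hr) as [Cc [hCc hcont]].
  destruct (discrete_part r m hr) as [Cd [hCd hdisc]].
  exists (Cc + Cd). split.
  - intros d F hs. destruct (hcont d F hs) as [h1 [h2 h3]].
    pose proof (cnorm2_nonneg d F hs m r ltac:(lra)).
    pose proof (cnorm2_nonneg d F hs (S m) (r + 1) ltac:(lra)).
    split; [|split; [|intros hbc; destruct (h3 hbc) as [h4 h5]; split]];
      (apply (le_mul_weaken _ Cc); [assumption| lra| lra]).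
  - intros d n f hn. destruct (hdisc d n f hn) as [h1 [h2 h3]].
    pose proof (dnorm2_nonneg d n r m f hr hn).
    pose proof (dnorm2_nonneg d n (r + 1) (S m) f ltac:(lra) hn).
    split; [|split; [|intros hbc; destruct (h3 hbc) as [h4 h5]; split]];
      (apply (le_mul_weaken _ Cd); [assumption| lra| lra]).
Qed.
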